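(* Let $S_n,T_n,z_0$ be such that $R_n(1)=z_0$, $R_n(z_0)=1$, $R_n'(1)R_n'(z_0)=1$ and $S_n/s^\nu\to\mu$, $T_n/s^\nu\to(d_1d_n-1)\mu$, $z_0/s^\nu\to d_1d_n\mu$ as $s\to0^+$. Let $\psi(z)=z_0/z$ and $\widehat R_n=\psi\circ R_n\circ\psi^{-1}$. Then, as $s\to0^+$, $R_n\circ R_n$ converges to $h_{d_1,d_n}(z)=\frac{(d_1d_n)^{d_n}z^{d_1d_n}}{(1+(d_1d_n-1)z^{d_1})^{d_n}}$ and $\widehat R_n\circ\widehat R_n$ converges to $h_{d_1d_n}(z)=\frac{d_1d_nz^{d_1d_n}}{1+(d_1d_n-1)z^{d_1d_n}}$, both locally uniformly on $\widehat{\mathbb{C}}\setminus\{0\}$.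
   Context: $n\ge3$ odd, $d_1,\dots,d_n$ positive integers with $\sum1/d_i<1$, $d_{\max}=\max_id_i$, $D_i=d_i+d_{i+1}$, $c_1=(d_{\max}^2s)^{1/d_1}$, $c_i=s^{1/d_i}c_{i-1}$, $R_n(z)=\frac{S_n}{z^{d_n}}\prod_{i=1}^{n-1}(z^{D_i}-c_i^{D_i})^{(-1)^i}+T_n$, $\nu=\frac{d_n}{d_n-1}\sum_{i=1}^{n-1}\frac1{d_i}$, $\mu=(d_1d_n)^{-d_n/(d_n-1)}d_{\max}^{2(d_n-d_1)/(d_1(d_n-1))}$. Such $S_n,T_n,z_0$ exist for small $s$. *)

From Stdlib Require Import Reals Lra Lia List.
Open Scope R_scope.

Definition Cplx : Type := (R * R)%type.
Definition RtoC (r : R) : Cplx := (r, 0).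
Definition Czero : Cplx := (0, 0).
Definition Cone : Cplx := (1, 0).
Definition Cadd (z w : Cplx) : Cplx := (fst z + fst w, snd z + snd w).
Definition Copp (z : Cplx) : Cplx := (- fst z, - snd z).
Definition Csub (z w : Cplx) : Cplx := Cadd z (Copp w).
Definition Cmul (z w : Cplx) : Cplx :=
  (fst z * fst w - snd z * snd w, fst z * snd w + snd z * fst w).
Definition Cnorm2 (z : Cplx) : R := fst z * fst z + snd z * snd z.
Definition Cabs (z : Cplx) : R := sqrt (Cnorm2 z).
(* inverse; the value at 0 is junk (0) *)
Definition Cinv (z : Cplx) : Cplx := (fst z / Cnorm2 z, - snd z / Cnorm2 z).
Definition Cdiv (z w : Cplx) : Cplx := Cmul z (Cinv w).
Fixpoint Cpow (z : Cplx) (k : nat) : Cplx :=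
  match k with O => Cone | S k' => Cmul z (Cpow z k') end.

Definition has_cderiv (f : Cplx -> Cplx) (z l : Cplx) : Prop :=
  forall eps, 0 < eps -> exists delta, 0 < delta /\
    forall h : Cplx, h <> Czero -> Cabs h < delta ->
      Cabs (Csub (Cdiv (Csub (f (Cadd z h)) (f z)) h) l) < eps.

(** * Riemann sphere: None is the point at infinity *)
Definition Chat : Type := option Cplx.
Definition infty : Chat := None.

Definition chord (a b : Chat) : R :=
  match a, b with
  | Some z, Some w => 2 * Cabs (Csub z w) / (sqrt (1 + Cnorm2 z) * sqrt (1 + Cnorm2 w))
  | Some z, None | None, Some z => 2 / sqrt (1 + Cnorm2 z)
  | None, None => 0
  end.

Definition sphere_continuous (F : Chat -> Chat) : Prop :=
  forall a eps, 0 < eps -> exists delta, 0 < delta /\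
    forall b, chord b a < delta -> chord (F b) (F a) < eps.

(** [F] is the (unique) continuous self-map of the Riemann sphere extending the
    formula [f], which is meaningful on the cofinite (hence dense) set [Dom]. *)
Definition sphere_ext (Dom : Cplx -> Prop) (f : Cplx -> Cplx) (F : Chat -> Chat) : Prop :=
  sphere_continuous F /\ forall z, Dom z -> F (Some z) = Some (f z).

Definition loc_unif_conv_0plus (F : R -> Chat -> Chat) (G : Chat -> Chat) : Prop :=
  forall w, w <> Some Czero -> exists r, 0 < r /\
    (forall z, chord z w < r -> z <> Some Czero) /\
    forall eps, 0 < eps -> exists delta, 0 < delta /\
      forall s, 0 < s < delta -> forall z, chord z w < r ->
        chord (F s z) (G z) < eps.

Definition lim_0plus (f : R -> R) (l : R) : Prop :=
  forall eps, 0 < eps -> exists delta, 0 < delta /\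
    forall s, 0 < s < delta -> Rabs (f s - l) < eps.

(** the Moebius map psi(z) = z0 / z on the sphere (psi(0)=oo, psi(oo)=0);
    it is an involution, so psi^{-1} = psi *)
Definition Ceq_dec (z : Cplx) : {z = Czero} + {z <> Czero}.
Proof.
  destruct z as [x y]; unfold Czero.
  destruct (Req_EM_T x 0) as [->|hx]; [destruct (Req_EM_T y 0) as [->|hy]|].
  - left; reflexivity.
  - right; intro E; inversion E; auto.
  - right; intro E; inversion E; auto.
Defined.

Definition psi (z0 : R) (a : Chat) : Chat :=
  match a with
  | None => Some Czero
  | Some z => if Ceq_dec z then None else Some (Cdiv (RtoC z0) z)
  end.

Definition psi_inv (z0 : R) (a : Chat) : Chat :=
  match a with
  | None => Some Czero
  | Some w => if Ceq_dec w then None else Some (Cdiv (RtoC z0) w)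
  end.

(** * The data of the paper.  Indices are 1-based: d 1, ..., d n. *)
Definition sum_inv (n : nat) (d : nat -> nat) : R :=
  fold_right Rplus 0 (map (fun i => / INR (d i)) (seq 1 n)).

Definition dmax (n : nat) (d : nat -> nat) : nat :=
  fold_right Nat.max 0%nat (map d (seq 1 n)).

Definition Dd (d : nat -> nat) (i : nat) : nat := (d i + d (S i))%nat.

(* caux k = c_{k+1} *)
Fixpoint caux (n : nat) (d : nat -> nat) (s : R) (k : nat) : R :=
  match k with
  | O => Rpower (INR (dmax n d) ^ 2 * s) (/ INR (d 1%nat))
  | S k' => Rpower s (/ INR (d (S (S k')))) * caux n d s k'
  end.

Definition cc (n : nat) (d : nat -> nat) (s : R) (i : nat) : R :=
  caux n d s (i - 1).

Definition fbase (n : nat) (d : nat -> nat) (s : R) (i : nat) (z : Cplx) : Cplx :=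
  Csub (Cpow z (Dd d i)) (RtoC (cc n d s i ^ Dd d i)).

(* (z^{D_i} - c_i^{D_i})^{(-1)^i} *)
Definition ffactor (n : nat) (d : nat -> nat) (s : R) (i : nat) (z : Cplx) : Cplx :=
  if Nat.odd i then Cinv (fbase n d s i z) else fbase n d s i z.

Definition Rn (n : nat) (d : nat -> nat) (s Sn Tn : R) (z : Cplx) : Cplx :=
  Cadd (Cmul (Cdiv (RtoC Sn) (Cpow z (d n)))
             (fold_right Cmul Cone (map (fun i => ffactor n d s i z) (seq 1 (n - 1)))))
       (RtoC Tn).

Definition Rn_dom (n : nat) (d : nat -> nat) (s : R) (z : Cplx) : Prop :=
  z <> Czero /\ forall i, (1 <= i <= n - 1)%nat -> fbase n d s i z <> Czero.

Definition nu (n : nat) (d : nat -> nat) : R :=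
  INR (d n) / (INR (d n) - 1) * sum_inv (n - 1) d.

Definition mu (n : nat) (d : nat -> nat) : R :=
  Rpower (INR (d 1%nat * d n)) (- (INR (d n) / (INR (d n) - 1))) *
  Rpower (INR (dmax n d))
    (2 * (INR (d n) - INR (d 1%nat)) / (INR (d 1%nat) * (INR (d n) - 1))).

Definition h2 (a b : nat) (z : Cplx) : Cplx :=
  Cdiv (Cmul (RtoC (INR (a * b) ^ b)) (Cpow z (a * b)))
       (Cpow (Cadd Cone (Cmul (RtoC (INR (a * b) - 1)) (Cpow z a))) b).
Definition h2_dom (a b : nat) (z : Cplx) : Prop :=
  Cadd Cone (Cmul (RtoC (INR (a * b) - 1)) (Cpow z a)) <> Czero.

Definition h1 (k : nat) (z : Cplx) : Cplx :=
  Cdiv (Cmul (RtoC (INR k)) (Cpow z k))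
       (Cadd Cone (Cmul (RtoC (INR k - 1)) (Cpow z k))).
Definition h1_dom (k : nat) (z : Cplx) : Prop :=
  Cadd Cone (Cmul (RtoC (INR k - 1)) (Cpow z k)) <> Czero.

(** Write [sigma = s^nu], [K = d_1 d_n] and [W = 1/z].  The proof rests on two
    asymptotic descriptions of [R_n], uniform as [s -> 0+]:
    - outer region ([1/z] bounded): [R_n(z) = sigma v] with
      [v -> mu (W^{d_1} + K - 1)], because every factor [1 - c_i^{D_i}/z^{D_i}]
      tends to 1 while [S_n/sigma -> mu] and [T_n/sigma -> (K-1) mu];
    - inner region ([z = sigma u], [u] bounded): [R_n(sigma u) = P / u^{d_n}]
      with [P -> alpha = (K mu)^{d_n}]; the limit of the leading coefficient is
      forced by the fixed-point equation [R_n(z_0) = 1], as [z_0/sigma -> K mu].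
    A point away from [0] is sent to [sigma v], in the inner region, and then
    to [P / v^{d_n} ~ alpha / (mu (W^{d_1} + K - 1))^{d_n} = h_{d_1,d_n}(z)].
    Conjugating by [psi(z) = z_0/z] exchanges the two regions and yields
    [h_{d_1 d_n}] in the same way. *)
From Stdlib Require Import Reals Lra Lia List Classical.
Open Scope R_scope.

Lemma Ceq (a b c e : R) : a = c -> b = e -> (a, b) = (c, e).
Proof. intros -> ->; reflexivity. Qed.

Lemma Cnorm2_nonneg z : 0 <= Cnorm2 z.
Proof. destruct z; unfold Cnorm2; simpl; nra. Qed.

Lemma Cnorm2_eq0 z : Cnorm2 z = 0 -> z = Czero.
Proof.
  destruct z as [x y]; unfold Cnorm2, Czero; simpl; intro H.
  assert (x = 0) by nra. assert (y = 0) by nra. subst; reflexivity.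
Qed.

Lemma Cnorm2_neq0 z : z <> Czero -> Cnorm2 z <> 0.
Proof. intros H E; apply H, Cnorm2_eq0, E. Qed.

(** [Cplx] is a field; registering it lets [ring] and [field] work on it. *)
Lemma Cring_th : ring_theory Czero Cone Cadd Cmul Csub Copp (@eq Cplx).
Proof.
  constructor; intros; repeat match goal with z : Cplx |- _ => destruct z end;
  unfold Cadd, Cmul, Csub, Copp, Czero, Cone; simpl; try reflexivity; apply Ceq; ring.
Qed.

Lemma Cone_neq0 : Cone <> Czero.
Proof. unfold Cone, Czero; intro E; inversion E; lra. Qed.

Lemma Cinv_l z : z <> Czero -> Cmul (Cinv z) z = Cone.
Proof.
  intro H; pose proof (Cnorm2_neq0 z H) as HN. destruct z as [x y].
  unfold Cinv, Cmul, Cone, Cnorm2 in *; simpl in *; apply Ceq; field; auto.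
Qed.

Lemma Cfield_th : field_theory Czero Cone Cadd Cmul Csub Copp Cdiv Cinv (@eq Cplx).
Proof.
  constructor; [exact Cring_th | exact Cone_neq0 | reflexivity | exact Cinv_l].
Qed.

Add Field Cfield : Cfield_th.

Ltac cdes := repeat match goal with z : Cplx |- _ => destruct z end.
Ltac cunf := unfold Csub, Cdiv in *;
  unfold Cadd, Cmul, Copp, Czero, Cone, RtoC, Cinv, Cnorm2 in *; simpl in *.

Lemma RtoC_add a b : RtoC (a + b) = Cadd (RtoC a) (RtoC b).
Proof. cunf; apply Ceq; ring. Qed.
Lemma RtoC_mul a b : RtoC (a * b) = Cmul (RtoC a) (RtoC b).
Proof. cunf; apply Ceq; ring. Qed.
Lemma RtoC_opp a : RtoC (- a) = Copp (RtoC a).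
Proof. cunf; apply Ceq; ring. Qed.
Lemma RtoC_sub a b : RtoC (a - b) = Csub (RtoC a) (RtoC b).
Proof. cunf; apply Ceq; ring. Qed.
Lemma RtoC_1 : RtoC 1 = Cone.
Proof. reflexivity. Qed.
Lemma RtoC_inj a b : RtoC a = RtoC b -> a = b.
Proof. unfold RtoC; intro H; inversion H; auto. Qed.
Lemma RtoC_neq0 a : a <> 0 -> RtoC a <> Czero.
Proof. intros H E; apply H; apply RtoC_inj; exact E. Qed.
Lemma RtoC_inv a : a <> 0 -> RtoC (/ a) = Cinv (RtoC a).
Proof. intro H. cunf; apply Ceq; field; auto. Qed.

Lemma Cmul_neq0 a b : a <> Czero -> b <> Czero -> Cmul a b <> Czero.
Proof.
  intros Ha Hb E. apply Hb.
  transitivity (Cmul (Cinv a) (Cmul a b)); [field; auto | rewrite E; ring].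
Qed.

Lemma Cinv_neq0 a : a <> Czero -> Cinv a <> Czero.
Proof. intros Ha E. apply Cone_neq0. rewrite <- (Cinv_l a Ha), E. ring. Qed.

(** The junk value [Cinv 0 = 0] makes inversion multiplicative without side conditions. *)
Lemma Cinv_0 : Cinv Czero = Czero.
Proof. cunf; apply Ceq; unfold Rdiv; rewrite Rmult_0_l; ring. Qed.

Lemma Cinv_mul a b : Cinv (Cmul a b) = Cmul (Cinv a) (Cinv b).
Proof.
  destruct (Ceq_dec a) as [->|Ha].
  { replace (Cmul Czero b) with Czero by ring. rewrite Cinv_0. ring. }
  destruct (Ceq_dec b) as [->|Hb].
  { replace (Cmul a Czero) with Czero by ring. rewrite Cinv_0. ring. }
  pose proof (Cmul_neq0 a b Ha Hb). field. auto.
Qed.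

Lemma Cpow_add z a b : Cpow z (a + b) = Cmul (Cpow z a) (Cpow z b).
Proof. induction a; simpl; [ring | rewrite IHa; ring]. Qed.
Lemma Cpow_mulb a b m : Cpow (Cmul a b) m = Cmul (Cpow a m) (Cpow b m).
Proof. induction m; simpl; [ring | rewrite IHm; ring]. Qed.
Lemma Cpow_mul z a b : Cpow z (a * b) = Cpow (Cpow z a) b.
Proof.
  revert a; induction b; intros a; simpl.
  - rewrite Nat.mul_0_r; reflexivity.
  - rewrite Nat.mul_succ_r, Cpow_add, IHb; ring.
Qed.
Lemma Cpow_inv z m : Cpow (Cinv z) m = Cinv (Cpow z m).
Proof.
  induction m; simpl.
  - cunf; apply Ceq; field.
  - rewrite Cinv_mul, IHm; reflexivity.
Qed.
Lemma Cpow_RtoC a m : Cpow (RtoC a) m = RtoC (a ^ m).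
Proof. induction m; simpl; [reflexivity | rewrite IHm, RtoC_mul; reflexivity]. Qed.
Lemma Cpow_neq0 z m : z <> Czero -> Cpow z m <> Czero.
Proof. intro H; induction m; simpl; [exact Cone_neq0 | apply Cmul_neq0; auto]. Qed.
Lemma Cpow_0 m : (1 <= m)%nat -> Cpow Czero m = Czero.
Proof. intros. destruct m; [lia|]. simpl. ring. Qed.
Lemma Cpow_1 x : Cpow x 1 = x.
Proof. cbn [Cpow]. ring. Qed.
Lemma Cdiv_pow a b m : Cdiv (Cpow a m) (Cpow b m) = Cpow (Cdiv a b) m.
Proof. unfold Cdiv. rewrite Cpow_mulb, Cpow_inv. reflexivity. Qed.

Lemma Cabs_nonneg z : 0 <= Cabs z.
Proof. apply sqrt_pos. Qed.
Lemma Cnorm2_mul a b : Cnorm2 (Cmul a b) = Cnorm2 a * Cnorm2 b.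
Proof. cdes; cunf; ring. Qed.
Lemma Cabs_mul a b : Cabs (Cmul a b) = Cabs a * Cabs b.
Proof. unfold Cabs; rewrite Cnorm2_mul; apply sqrt_mult; apply Cnorm2_nonneg. Qed.
Lemma Cabs_sq z : Cabs z * Cabs z = Cnorm2 z.
Proof. unfold Cabs; apply sqrt_sqrt, Cnorm2_nonneg. Qed.
Lemma Cabs_RtoC a : Cabs (RtoC a) = Rabs a.
Proof. unfold Cabs, Cnorm2, RtoC; simpl. rewrite Rmult_0_l, Rplus_0_r. apply sqrt_Rsqr_abs. Qed.
Lemma Cabs_0 : Cabs Czero = 0.
Proof. unfold Cabs, Cnorm2, Czero; simpl. rewrite Rmult_0_l, Rplus_0_r. apply sqrt_0. Qed.
Lemma Cabs_1 : Cabs Cone = 1.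
Proof. unfold Cabs, Cnorm2, Cone; simpl. rewrite Rmult_0_l, Rplus_0_r, Rmult_1_l. apply sqrt_1. Qed.
Lemma Cabs_eq0 z : Cabs z = 0 -> z = Czero.
Proof. intro H. apply Cnorm2_eq0. rewrite <- Cabs_sq, H; ring. Qed.
Lemma Cabs_pos z : z <> Czero -> 0 < Cabs z.
Proof. intro H. destruct (Cabs_nonneg z); auto. exfalso; apply H, Cabs_eq0; auto. Qed.
Lemma Cabs_pow z m : Cabs (Cpow z m) = Cabs z ^ m.
Proof. induction m; simpl; [apply Cabs_1 | rewrite Cabs_mul, IHm; reflexivity]. Qed.
Lemma Cabs_inv z : Cabs (Cinv z) = / Cabs z.
Proof.
  destruct (Ceq_dec z) as [->|H]; [rewrite Cinv_0, Cabs_0, Rinv_0; reflexivity|].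
  pose proof (Cabs_pos z H).
  apply (Rmult_eq_reg_l (Cabs z)); [| lra].
  rewrite <- Cabs_mul, (Cring_th.(Rmul_comm)), Cinv_l by exact H. rewrite Cabs_1. field. lra.
Qed.
Lemma Cabs_opp z : Cabs (Copp z) = Cabs z.
Proof. unfold Cabs; f_equal; cdes; cunf; ring. Qed.
Lemma Cabs_sub_sym a b : Cabs (Csub a b) = Cabs (Csub b a).
Proof. unfold Cabs; f_equal; cdes; cunf; ring. Qed.
Lemma Cnorm2_div a b : b <> Czero -> Cnorm2 (Cdiv a b) = Cnorm2 a / Cnorm2 b.
Proof. intro H. pose proof (Cnorm2_neq0 _ H). cdes; cunf; field; auto. Qed.
Lemma Cabs_div a b : Cabs (Cdiv a b) = Cabs a / Cabs b.
Proof. unfold Cdiv. rewrite Cabs_mul, Cabs_inv. reflexivity. Qed.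

Lemma le_sqrt_of_sq x y : 0 <= y -> x * x <= y -> x <= sqrt y.
Proof.
  intros Hy H. apply Rle_trans with (Rabs x); [apply Rle_abs|].
  rewrite <- sqrt_Rsqr_abs. apply sqrt_le_1_alt. unfold Rsqr; lra.
Qed.

Lemma Cabs_triangle a b : Cabs (Cadd a b) <= Cabs a + Cabs b.
Proof.
  pose proof (Cabs_nonneg a); pose proof (Cabs_nonneg b).
  assert (CS : fst a * fst b + snd a * snd b <= Cabs a * Cabs b).
  { unfold Cabs. rewrite <- sqrt_mult by apply Cnorm2_nonneg.
    apply le_sqrt_of_sq; [apply Rmult_le_pos; apply Cnorm2_nonneg|].
    destruct a as [x1 y1], b as [x2 y2]; unfold Cnorm2; simpl.
    pose proof (Rle_0_sqr (x1*y2 - y1*x2)); unfold Rsqr in *; nra. }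
  unfold Cabs at 1. rewrite <- (sqrt_square (Cabs a + Cabs b)) by lra.
  apply sqrt_le_1_alt.
  replace ((Cabs a + Cabs b) * (Cabs a + Cabs b))
    with (Cabs a * Cabs a + Cabs b * Cabs b + 2 * (Cabs a * Cabs b)) by ring.
  rewrite !Cabs_sq. destruct a, b; cunf; nra.
Qed.

Lemma Cabs_rev a b : Cabs a - Cabs b <= Cabs (Csub a b).
Proof.
  pose proof (Cabs_triangle (Csub a b) b).
  replace (Cadd (Csub a b) b) with a in H by ring. lra.
Qed.

Lemma Cabs_near a c e : Cabs (Csub a c) <= e -> Cabs a <= Cabs c + e.
Proof.
  intro H. pose proof (Cabs_triangle (Csub a c) c).
  replace (Cadd (Csub a c) c) with a in H0 by ring. lra.
Qed.

Lemma Cpow_lip x y m B : 1 <= B -> Cabs x <= B -> Cabs y <= B ->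
  Cabs (Csub (Cpow x m) (Cpow y m)) <= INR m * B ^ m * Cabs (Csub x y).
Proof.
  intros HB Hx Hy. induction m.
  - simpl. replace (Csub Cone Cone) with Czero by ring. rewrite Cabs_0. lra.
  - simpl Cpow. replace (Csub (Cmul x (Cpow x m)) (Cmul y (Cpow y m)))
      with (Cadd (Cmul x (Csub (Cpow x m) (Cpow y m))) (Cmul (Csub x y) (Cpow y m))) by ring.
    eapply Rle_trans; [apply Cabs_triangle|]. rewrite !Cabs_mul, Cabs_pow.
    pose proof (Cabs_nonneg x); pose proof (Cabs_nonneg y); pose proof (Cabs_nonneg (Csub x y)).
    pose proof (Cabs_nonneg (Csub (Cpow x m) (Cpow y m))).
    assert (HBm : 1 <= B ^ m) by (rewrite <- (pow1 m); apply pow_incr; lra).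
    assert (Hym : Cabs y ^ m <= B ^ m) by (apply pow_incr; lra).
    assert (Cabs x * Cabs (Csub (Cpow x m) (Cpow y m)) <= B * (INR m * B ^ m * Cabs (Csub x y)))
      by (apply Rmult_le_compat; lra).
    assert (Cabs (Csub x y) * Cabs y ^ m <= B ^ m * Cabs (Csub x y)) by nra.
    rewrite S_INR. simpl pow. pose proof (pos_INR m).
    assert (B ^ m * Cabs (Csub x y) <= B * B ^ m * Cabs (Csub x y)) by (apply Rmult_le_compat_r; [lra| nra]).
    lra.
Qed.

Lemma Rpow_lip x y m B : 1 <= B -> Rabs x <= B -> Rabs y <= B ->
  Rabs (x ^ m - y ^ m) <= INR m * B ^ m * Rabs (x - y).
Proof.
  intros. pose proof (Cpow_lip (RtoC x) (RtoC y) m B H).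
  rewrite !Cpow_RtoC, <- !RtoC_sub, !Cabs_RtoC in H2. auto.
Qed.

(** ** The chordal metric *)

(** The chordal distance is the Euclidean distance between stereographic
    images; this gives its triangle inequality. *)
Definition norm3 (a b c : R) := sqrt (a*a + b*b + c*c).

Lemma norm3_tri a1 a2 a3 b1 b2 b3 :
  norm3 (a1+b1) (a2+b2) (a3+b3) <= norm3 a1 a2 a3 + norm3 b1 b2 b3.
Proof.
  unfold norm3.
  set (A := sqrt (a1*a1+a2*a2+a3*a3)). set (B := sqrt (b1*b1+b2*b2+b3*b3)).
  assert (HA : 0 <= A) by apply sqrt_pos. assert (HB : 0 <= B) by apply sqrt_pos.
  assert (HA2 : A * A = a1*a1+a2*a2+a3*a3) by (apply sqrt_sqrt; nra).
  assert (HB2 : B * B = b1*b1+b2*b2+b3*b3) by (apply sqrt_sqrt; nra).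
  assert (CS : a1*b1+a2*b2+a3*b3 <= A * B).
  { apply Rle_trans with (Rabs (a1*b1+a2*b2+a3*b3)); [apply Rle_abs|].
    rewrite <- (Rabs_pos_eq (A*B)) by nra. apply Rsqr_le_abs_0.
    unfold Rsqr. replace (A*B*(A*B)) with ((A*A)*(B*B)) by ring. rewrite HA2, HB2.
    pose proof (Rle_0_sqr (a1*b2-a2*b1)); pose proof (Rle_0_sqr (a1*b3-a3*b1));
    pose proof (Rle_0_sqr (a2*b3-a3*b2)); unfold Rsqr in *; nra. }
  rewrite <- (sqrt_square (A + B)) by lra. apply sqrt_le_1_alt. nra.
Qed.

Definition stereo (a : Chat) : R * R * R :=
  match a with
  | None => (0, 0, 1)
  | Some z => let A := 1 + Cnorm2 z in (2 * fst z / A, 2 * snd z / A, (A - 2) / A)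
  end.

Definition dist3 (p q : R * R * R) : R :=
  match p, q with (p1,p2,p3), (q1,q2,q3) => norm3 (p1-q1) (p2-q2) (p3-q3) end.

Lemma sqrt1N_pos z : 0 < sqrt (1 + Cnorm2 z).
Proof. apply sqrt_lt_R0. pose proof (Cnorm2_nonneg z). lra. Qed.
Lemma sqrt1N_ge1 z : 1 <= sqrt (1 + Cnorm2 z).
Proof.
  apply Rle_trans with (sqrt 1); [rewrite sqrt_1; lra|].
  apply sqrt_le_1_alt. pose proof (Cnorm2_nonneg z). lra.
Qed.
Lemma sqrt1N_geabs z : Cabs z <= sqrt (1 + Cnorm2 z).
Proof. unfold Cabs. apply sqrt_le_1_alt. lra. Qed.
Lemma sqrt1N_le z : sqrt (1 + Cnorm2 z) <= 1 + Cabs z.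
Proof.
  unfold Cabs. rewrite <- (sqrt_square (1 + sqrt (Cnorm2 z))) by (pose proof (sqrt_pos (Cnorm2 z)); lra).
  apply sqrt_le_1_alt. pose proof (sqrt_pos (Cnorm2 z)).
  rewrite <- (sqrt_sqrt (Cnorm2 z)) at 1 by apply Cnorm2_nonneg. nra.
Qed.

Lemma chord_nonneg a b : 0 <= chord a b.
Proof.
  destruct a as [z|], b as [w|]; simpl; try lra.
  - pose proof (Cabs_nonneg (Csub z w)). pose proof (sqrt1N_pos z). pose proof (sqrt1N_pos w).
    apply Rmult_le_pos; [lra|]. apply Rlt_le, Rinv_0_lt_compat, Rmult_lt_0_compat; auto.
  - pose proof (sqrt1N_pos z). apply Rmult_le_pos; [lra|]. apply Rlt_le, Rinv_0_lt_compat; auto.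
  - pose proof (sqrt1N_pos w). apply Rmult_le_pos; [lra|]. apply Rlt_le, Rinv_0_lt_compat; auto.
Qed.

Lemma chord_stereo a b : chord a b = dist3 (stereo a) (stereo b).
Proof.
  assert (Hsq : forall x y, 0 <= x -> 0 <= y -> x * x = y * y -> x = y) by (intros; nra).
  apply Hsq; [apply chord_nonneg | destruct a as [[x y]|], b as [[u v]|]; simpl; unfold norm3; apply sqrt_pos|].
  clear Hsq.
  destruct a as [[x y]|], b as [[u v]|]; simpl; unfold norm3, Cabs, Cnorm2; simpl.
  - set (A := 1 + (x*x+y*y)). set (B := 1 + (u*u+v*v)).
    assert (HA : 0 < A) by (unfold A; nra). assert (HB : 0 < B) by (unfold B; nra).
    rewrite sqrt_sqrt by (apply Rplus_le_le_0_compat; [apply Rplus_le_le_0_compat|]; apply Rle_0_sqr).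
    set (D := (x + - u) * (x + - u) + (y + - v) * (y + - v)).
    assert (HD : 0 <= D) by (unfold D; apply Rplus_le_le_0_compat; apply Rle_0_sqr).
    replace (2 * sqrt D / (sqrt A * sqrt B) * (2 * sqrt D / (sqrt A * sqrt B)))
      with (4 * (sqrt D * sqrt D) / ((sqrt A * sqrt A) * (sqrt B * sqrt B)))
      by (field; split; apply Rgt_not_eq, sqrt_lt_R0; lra).
    rewrite (sqrt_sqrt A), (sqrt_sqrt B), (sqrt_sqrt D) by lra.
    unfold A, B, D in *. field. lra.
  - set (A := 1 + (x*x+y*y)). assert (HA : 0 < A) by (unfold A; nra).
    rewrite sqrt_sqrt by (apply Rplus_le_le_0_compat; [apply Rplus_le_le_0_compat|]; apply Rle_0_sqr).
    replace (2 / sqrt A * (2 / sqrt A)) with (4 / (sqrt A * sqrt A))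
      by (field; apply Rgt_not_eq, sqrt_lt_R0; lra).
    rewrite sqrt_sqrt by lra. unfold A in *. field. lra.
  - set (A := 1 + (u*u+v*v)). assert (HA : 0 < A) by (unfold A; nra).
    rewrite sqrt_sqrt by (apply Rplus_le_le_0_compat; [apply Rplus_le_le_0_compat|]; apply Rle_0_sqr).
    replace (2 / sqrt A * (2 / sqrt A)) with (4 / (sqrt A * sqrt A))
      by (field; apply Rgt_not_eq, sqrt_lt_R0; lra).
    rewrite sqrt_sqrt by lra. unfold A in *. field. lra.
  - rewrite sqrt_sqrt by lra. ring.
Qed.

Lemma chord_tri a b c : chord a c <= chord a b + chord b c.
Proof.
  rewrite !chord_stereo.
  destruct (stereo a) as [[p1 p2] p3], (stereo b) as [[q1 q2] q3], (stereo c) as [[r1 r2] r3].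
  simpl. replace (p1 - r1) with ((p1-q1)+(q1-r1)) by ring.
  replace (p2 - r2) with ((p2-q2)+(q2-r2)) by ring.
  replace (p3 - r3) with ((p3-q3)+(q3-r3)) by ring. apply norm3_tri.
Qed.

Lemma chord_sym a b : chord a b = chord b a.
Proof. destruct a, b; simpl; auto. rewrite Cabs_sub_sym. f_equal. ring. Qed.

Lemma chord_refl a : chord a a = 0.
Proof. destruct a; simpl; auto. replace (Csub c c) with Czero by ring. rewrite Cabs_0. lra. Qed.

Lemma chord_eq0 a b : chord a b = 0 -> a = b.
Proof.
  destruct a as [z|], b as [w|]; simpl; intro H; auto.
  - pose proof (sqrt1N_pos z); pose proof (sqrt1N_pos w).
    assert (Hd : Cabs (Csub z w) = 0).
    { pose proof (Cabs_nonneg (Csub z w)).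
      destruct (Req_dec (Cabs (Csub z w)) 0) as [|Hne]; auto. exfalso.
      assert (0 < 2 * Cabs (Csub z w) / (sqrt (1 + Cnorm2 z) * sqrt (1 + Cnorm2 w)))
        by (apply Rdiv_lt_0_compat; [lra| apply Rmult_lt_0_compat; auto]).
      lra. }
    apply Cabs_eq0 in Hd. f_equal. replace z with (Cadd (Csub z w) w) by ring. rewrite Hd; ring.
  - exfalso. pose proof (sqrt1N_pos z).
    assert (0 < 2 / sqrt (1 + Cnorm2 z)) by (apply Rdiv_lt_0_compat; lra). lra.
  - exfalso. pose proof (sqrt1N_pos w).
    assert (0 < 2 / sqrt (1 + Cnorm2 w)) by (apply Rdiv_lt_0_compat; lra). lra.
Qed.

Lemma chord_zero_of_small a b : (forall eps, 0 < eps -> chord a b < eps) -> a = b.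
Proof.
  intro H. apply chord_eq0. pose proof (chord_nonneg a b).
  destruct H0; auto. specialize (H _ H0). lra.
Qed.

Lemma chord_None_0 : chord None (Some Czero) = 2.
Proof.
  simpl. replace (Cnorm2 Czero) with 0 by (unfold Cnorm2, Czero; simpl; ring).
  rewrite Rplus_0_r, sqrt_1. lra.
Qed.

Lemma chord_SS_le z w : chord (Some z) (Some w) <= 2 * Cabs (Csub z w).
Proof.
  simpl. pose proof (sqrt1N_ge1 z); pose proof (sqrt1N_ge1 w). pose proof (Cabs_nonneg (Csub z w)).
  unfold Rdiv. rewrite <- (Rmult_1_r (2 * Cabs (Csub z w))) at 2. apply Rmult_le_compat_l; [lra|].
  assert (Hp : 1 <= sqrt (1 + Cnorm2 z) * sqrt (1 + Cnorm2 w))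
    by (rewrite <- (Rmult_1_l 1) at 1; apply Rmult_le_compat; lra).
  pose proof (Rinv_le_contravar 1 _ ltac:(lra) Hp). rewrite Rinv_1 in H2. exact H2.
Qed.

Lemma chord_SN_le z : chord (Some z) None * Cabs z <= 2.
Proof.
  simpl. pose proof (sqrt1N_pos z); pose proof (sqrt1N_geabs z). pose proof (Cabs_nonneg z).
  unfold Rdiv. rewrite Rmult_assoc. rewrite <- (Rmult_1_r 2) at 2. apply Rmult_le_compat_l; [lra|].
  apply (Rmult_le_reg_l (sqrt (1 + Cnorm2 z))); auto. rewrite <- Rmult_assoc, Rinv_r; lra.
Qed.

Lemma chord_SN_inv z dl : 0 < dl <= 1 -> chord (Some z) None < dl -> 1 / dl < Cabs z.
Proof.
  simpl. intros Hd H. pose proof (sqrt1N_pos z).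
  assert (H1 : 2 / dl < sqrt (1 + Cnorm2 z)).
  { set (q := sqrt (1 + Cnorm2 z)) in *.
    assert (E1 : 2 / q * q = 2) by (field; lra). assert (E2 : 2 / dl * dl = 2) by (field; lra).
    assert (2 < dl * q) by nra. nra. }
  assert (H2 : 4 / (dl*dl) < 1 + Cnorm2 z).
  { rewrite <- (sqrt_sqrt (1 + Cnorm2 z)) by (pose proof (Cnorm2_nonneg z); lra).
    replace (4 / (dl*dl)) with ((2/dl)*(2/dl)) by (field; lra).
    assert (0 < 2/dl) by (apply Rdiv_lt_0_compat; lra). nra. }
  assert (H3 : (1/dl)*(1/dl) < Cabs z * Cabs z).
  { rewrite Cabs_sq. replace ((1/dl)*(1/dl)) with (/(dl*dl)) by (field; lra).
    assert (/(dl*dl) >= 1) by (apply Rle_ge; rewrite <- Rinv_1 at 1; apply Rinv_le_contravar; nra).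
    replace (4/(dl*dl)) with (4*(/(dl*dl))) in H2 by (field; lra). lra. }
  pose proof (Cabs_nonneg z). assert (0 < 1/dl) by (apply Rdiv_lt_0_compat; lra). nra.
Qed.

Lemma chord_SS_inv z a c : chord (Some z) (Some a) <= c -> c * (1 + Cabs a) <= 1 ->
  Cabs (Csub z a) <= c * ((1 + Cabs a) * (1 + Cabs a)).
Proof.
  intros H Hc. assert (Hc0 : 0 <= c) by (pose proof (chord_nonneg (Some z) (Some a)); lra).
  simpl in H. set (t := Cabs (Csub z a)) in *. set (A := 1 + Cabs a) in *.
  pose proof (sqrt1N_pos z); pose proof (sqrt1N_pos a). pose proof (Cabs_nonneg a).
  assert (0 <= t) by apply Cabs_nonneg.
  assert (Hz : sqrt (1 + Cnorm2 z) <= A + t).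
  { apply Rle_trans with (1 + Cabs z); [apply sqrt1N_le|].
    pose proof (Cabs_near z a t (Rle_refl _)). unfold A; lra. }
  assert (Ha : sqrt (1 + Cnorm2 a) <= A) by apply sqrt1N_le.
  set (q := sqrt (1 + Cnorm2 z) * sqrt (1 + Cnorm2 a)) in *.
  assert (Hq : 0 < q) by (unfold q; apply Rmult_lt_0_compat; auto).
  assert (E : 2 * t / q * q = 2 * t) by (field; lra).
  assert (H6 : 2 * t <= c * q) by nra.
  assert (H7 : q <= (A + t) * A) by (unfold q; apply Rmult_le_compat; lra).
  nra.
Qed.

Lemma near0_finite b dl : dl <= 1 -> chord b (Some Czero) < dl ->
  exists z, b = Some z /\ Cabs z <= dl.
Proof.
  intros Hdl Hb. destruct b as [z|]; [| rewrite chord_None_0 in Hb; lra].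
  exists z. split; auto.
  pose proof (chord_SS_inv z Czero dl ltac:(lra)) as Hz.
  rewrite Cabs_0 in Hz. replace (Csub z Czero) with z in Hz by ring.
  specialize (Hz ltac:(lra)). lra.
Qed.

Lemma near_infty_inv z dl : 0 < dl <= 1 -> chord (Some z) None < dl ->
  z <> Czero /\ Cabs (Cinv z) < dl.
Proof.
  intros Hdl Hb. pose proof (chord_SN_inv z dl Hdl Hb) as Hz.
  assert (H1 : 0 < 1 / dl) by (apply Rdiv_lt_0_compat; lra).
  split; [intro E; rewrite E, Cabs_0 in Hz; lra|].
  rewrite Cabs_inv. replace dl with (/ (1 / dl)) by (field; lra). apply Rinv_lt_contravar; nra.
Qed.

(** ** Quotient points [a/b] of the sphere *)

Definition hc (a b : Cplx) : Chat := if Ceq_dec b then None else Some (Cdiv a b).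

Lemma hc_one a : hc a Cone = Some a.
Proof.
  unfold hc. destruct (Ceq_dec Cone) as [E|E]; [exfalso; apply Cone_neq0, E|].
  f_equal. field. exact Cone_neq0.
Qed.

Lemma hc_zero a : hc a Czero = None.
Proof. unfold hc. destruct (Ceq_dec Czero); auto. congruence. Qed.

Definition nrm2 (a b : Cplx) := sqrt (Cnorm2 a + Cnorm2 b).

Lemma nrm2_ge_l a b : Cabs a <= nrm2 a b.
Proof. unfold Cabs, nrm2. apply sqrt_le_1_alt. pose proof (Cnorm2_nonneg b). lra. Qed.
Lemma nrm2_ge_r a b : Cabs b <= nrm2 a b.
Proof. unfold Cabs, nrm2. apply sqrt_le_1_alt. pose proof (Cnorm2_nonneg a). lra. Qed.
Lemma nrm2_pos a b : b <> Czero -> 0 < nrm2 a b.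
Proof. intro H. pose proof (Cabs_pos b H). pose proof (nrm2_ge_r a b). lra. Qed.
Lemma nrm2_0 a : nrm2 a Czero = Cabs a.
Proof. unfold nrm2, Cabs; f_equal; unfold Cnorm2, Czero; simpl; ring. Qed.

Lemma sqrt1_div a b : b <> Czero -> sqrt (1 + Cnorm2 (Cdiv a b)) = nrm2 a b / Cabs b.
Proof.
  intro H. pose proof (Cnorm2_neq0 _ H). pose proof (Cnorm2_nonneg b). pose proof (Cnorm2_nonneg a).
  rewrite Cnorm2_div by auto. unfold nrm2, Cabs. rewrite <- sqrt_div_alt by lra. f_equal. field. auto.
Qed.

Lemma chord_hc a b c d : (a <> Czero \/ b <> Czero) -> (c <> Czero \/ d <> Czero) ->
  chord (hc a b) (hc c d) = 2 * Cabs (Csub (Cmul a d) (Cmul b c)) / (nrm2 a b * nrm2 c d).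
Proof.
  intros Hab Hcd. unfold hc.
  destruct (Ceq_dec b) as [Hb|Hb]; destruct (Ceq_dec d) as [Hd|Hd]; simpl.
  - subst. replace (Csub (Cmul a Czero) (Cmul Czero c)) with Czero by ring. rewrite Cabs_0. lra.
  - subst. destruct Hab as [Ha|Ha]; [|congruence].
    rewrite sqrt1_div, nrm2_0 by auto.
    replace (Csub (Cmul a d) (Cmul Czero c)) with (Cmul a d) by ring. rewrite Cabs_mul.
    pose proof (Cabs_pos a Ha); pose proof (Cabs_pos d Hd). pose proof (nrm2_pos c d Hd).
    field. lra.
  - subst. destruct Hcd as [Hc|Hc]; [|congruence].
    rewrite sqrt1_div, nrm2_0 by auto.
    replace (Csub (Cmul a Czero) (Cmul b c)) with (Copp (Cmul b c)) by ring. rewrite Cabs_opp, Cabs_mul.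
    pose proof (Cabs_pos c Hc); pose proof (Cabs_pos b Hb). pose proof (nrm2_pos a b Hb).
    field. lra.
  - rewrite !sqrt1_div by auto.
    replace (Csub (Cdiv a b) (Cdiv c d)) with (Cdiv (Csub (Cmul a d) (Cmul b c)) (Cmul b d)) by (field; auto).
    rewrite Cabs_div, Cabs_mul.
    pose proof (Cabs_pos b Hb); pose proof (Cabs_pos d Hd). pose proof (nrm2_pos a b Hb). pose proof (nrm2_pos c d Hd).
    field. lra.
Qed.

Lemma hc_close a b c d m M eta :
  0 < m -> m <= Cabs c -> Cabs c <= M -> Cabs d <= M -> 0 <= eta -> eta <= m / 2 ->
  Cabs (Csub a c) <= eta -> Cabs (Csub b d) <= eta ->
  chord (hc a b) (hc c d) <= 8 * M * eta / (m * m).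
Proof.
  intros Hm Hc HcM HdM He He2 Hac Hbd.
  assert (Ha : m / 2 <= Cabs a) by (pose proof (Cabs_rev c a); rewrite Cabs_sub_sym in H; lra).
  assert (Ha0 : a <> Czero) by (intro E; subst; rewrite Cabs_0 in Ha; lra).
  assert (Hc0 : c <> Czero) by (intro E; subst; rewrite Cabs_0 in Hc; lra).
  rewrite chord_hc by auto.
  assert (N1 : m / 2 <= nrm2 a b) by (pose proof (nrm2_ge_l a b); lra).
  assert (N2 : m <= nrm2 c d) by (pose proof (nrm2_ge_l c d); lra).
  assert (Hx : Cabs (Csub (Cmul a d) (Cmul b c)) <= 2 * M * eta).
  { replace (Csub (Cmul a d) (Cmul b c)) with (Cadd (Cmul (Csub a c) d) (Cmul c (Csub d b))) by ring.
    eapply Rle_trans; [apply Cabs_triangle|]. rewrite !Cabs_mul, (Cabs_sub_sym d b).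
    pose proof (Cabs_nonneg d); pose proof (Cabs_nonneg c).
    pose proof (Cabs_nonneg (Csub a c)); pose proof (Cabs_nonneg (Csub b d)).
    nra. }
  pose proof (Cabs_nonneg (Csub (Cmul a d) (Cmul b c))).
  apply Rle_trans with (2 * (2 * M * eta) / ((m/2) * m)).
  - unfold Rdiv. apply Rmult_le_compat; try lra.
    + apply Rlt_le, Rinv_0_lt_compat. nra.
    + apply Rinv_le_contravar; [nra|]. apply Rmult_le_compat; lra.
  - right. field. lra.
Qed.

Lemma hc_uniform m M eps : 0 < m -> 0 < eps -> exists zeta, 0 < zeta /\
  forall a b c d, m <= Cabs c -> Cabs c <= M -> Cabs d <= M ->
    Cabs (Csub a c) <= zeta -> Cabs (Csub b d) <= zeta -> chord (hc a b) (hc c d) < eps.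
Proof.
  intros Hm He. set (M' := Rmax M 1). assert (HM' : 1 <= M') by apply Rmax_r.
  set (zeta := Rmin (m / 2) (eps * (m * m) / (16 * M'))).
  assert (Hz1 : zeta <= m / 2) by apply Rmin_l.
  assert (Hz2 : zeta <= eps * (m * m) / (16 * M')) by apply Rmin_r.
  assert (Hz : 0 < zeta)
    by (apply Rmin_glb_lt; [lra| apply Rdiv_lt_0_compat; [apply Rmult_lt_0_compat; nra| lra]]).
  exists zeta. split; [exact Hz|]. intros a b c d Hc HcM HdM Hac Hbd.
  assert (HM : M <= M') by apply Rmax_l.
  eapply Rle_lt_trans; [apply (hc_close a b c d m M' zeta); lra|].
  apply Rle_lt_trans with (8 * M' * (eps * (m * m) / (16 * M')) / (m * m)).
  - unfold Rdiv. apply Rmult_le_compat_r; [left; apply Rinv_0_lt_compat; nra|].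
    apply Rmult_le_compat_l; lra.
  - replace (8 * M' * (eps * (m * m) / (16 * M')) / (m * m)) with (eps / 2) by (field; nra). lra.
Qed.

(** ** Identifying continuous maps of the sphere *)

Definition ccont (F : Chat -> Chat) (a : Chat) :=
  forall eps, 0 < eps -> exists dl, 0 < dl /\ forall b, chord b a < dl -> chord (F b) (F a) < eps.

Definition vcont (N : Chat -> Cplx) (a : Chat) :=
  forall eps, 0 < eps -> exists dl, 0 < dl /\ forall b, chord b a < dl -> Cabs (Csub (N b) (N a)) < eps.

Lemma ext_hc (F : Chat -> Chat) (N D : Chat -> Cplx) (a : Chat) :
  ccont F a -> vcont N a -> vcont D a -> N a <> Czero ->
  (forall dl, 0 < dl -> exists b, chord b a < dl /\ F b = hc (N b) (D b)) ->
  F a = hc (N a) (D a).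
Proof.
  intros HF HN HD Ha Hdense. apply chord_zero_of_small. intros eps Heps.
  destruct (hc_uniform (Cabs (N a)) (Cabs (N a) + Cabs (D a)) (eps / 2))
    as [zeta [Hz Hclose]]; [apply Cabs_pos; auto | lra |].
  destruct (HF (eps/2) ltac:(lra)) as [d1 [Hd1 H1]].
  destruct (HN zeta Hz) as [d2 [Hd2 H2]].
  destruct (HD zeta Hz) as [d3 [Hd3 H3]].
  destruct (Hdense (Rmin d1 (Rmin d2 d3))) as [b [Hb Fb]].
  { apply Rmin_glb_lt; auto; apply Rmin_glb_lt; auto. }
  pose proof (Rmin_l d1 (Rmin d2 d3)); pose proof (Rmin_r d1 (Rmin d2 d3)).
  pose proof (Rmin_l d2 d3); pose proof (Rmin_r d2 d3).
  specialize (H1 b ltac:(lra)). specialize (H2 b ltac:(lra)). specialize (H3 b ltac:(lra)).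
  rewrite Fb, chord_sym in H1.
  assert (Hc : chord (hc (N b) (D b)) (hc (N a) (D a)) < eps / 2).
  { pose proof (Cabs_nonneg (N a)); pose proof (Cabs_nonneg (D a)). apply Hclose; lra. }
  pose proof (chord_tri (F a) (hc (N b) (D b)) (hc (N a) (D a))). lra.
Qed.

(** Density of points whose modulus avoids finitely many values: each value is
    the zero of an increasing function of the radius. *)
Definition incr (L : list (R -> R)) := forall g, In g L -> forall x y, 0 < x -> x < y -> g x < g y.
Definition goodrad (L : list (R -> R)) (z : Cplx) := z <> Czero /\ forall g, In g L -> g (Cabs z) <> 0.

Lemma avoid_list (L : list (R -> R)) : incr L ->
  forall dl, 0 < dl -> exists t0, 0 < t0 < dl /\ forall t, 0 < t <= t0 -> forall h, In h L -> h t <> 0.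
Proof.
  induction L as [|h L IH]; intros HL dl Hdl.
  - exists (dl/2). split; [lra|]. intros t _ h [].
  - destruct (IH (fun g Hg => HL g (or_intror Hg)) dl Hdl) as [t0 [Ht0 Hall]].
    destruct (classic (exists ts, 0 < ts <= t0 /\ h ts = 0)) as [[ts [Hts Hz]]|Hno].
    + exists (ts/2). split; [lra|]. intros t Ht g [->|Hg].
      * assert (g t < g ts) by (apply (HL g (or_introl eq_refl)); lra). lra.
      * apply Hall; auto; lra.
    + exists t0. split; auto. intros t Ht g [->|Hg].
      * intro E. apply Hno. exists t; auto.
      * apply Hall; auto.
Qed.

Lemma dense_some (L : list (R -> R)) (a0 : Cplx) dl : incr L -> 0 < dl ->
  exists z, Cabs (Csub z a0) < dl /\ goodrad L z.
Proof.
  intros HL Hdl. destruct (Ceq_dec a0) as [->|Ha].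
  - destruct (avoid_list L HL dl Hdl) as [t [Ht Hall]].
    exists (RtoC t). assert (Cabs (RtoC t) = t) by (rewrite Cabs_RtoC; apply Rabs_pos_eq; lra).
    split; [replace (Csub (RtoC t) Czero) with (RtoC t) by ring; lra|].
    split; [apply RtoC_neq0; lra|]. intros g Hg. rewrite H. apply Hall; auto; lra.
  - pose proof (Cabs_pos a0 Ha) as Hpa.
    set (L' := map (fun g => fun t => g (Cabs a0 * (1 + t))) L).
    assert (HL' : incr L').
    { intros h Hh x y Hx Hxy. unfold L' in Hh. apply in_map_iff in Hh. destruct Hh as [g [<- Hg]].
      apply (HL g Hg); nra. }
    destruct (avoid_list L' HL' (dl / Cabs a0) ltac:(apply Rdiv_lt_0_compat; lra)) as [t [Ht Hall]].
    exists (Cmul a0 (RtoC (1 + t))).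
    assert (Habs : Cabs (Cmul a0 (RtoC (1 + t))) = Cabs a0 * (1 + t))
      by (rewrite Cabs_mul, Cabs_RtoC, Rabs_pos_eq; lra).
    split; [|split].
    + replace (Csub (Cmul a0 (RtoC (1 + t))) a0) with (Cmul a0 (RtoC t)) by (rewrite RtoC_add, RtoC_1; ring).
      rewrite Cabs_mul, Cabs_RtoC, Rabs_pos_eq by lra.
      assert (t * Cabs a0 < dl / Cabs a0 * Cabs a0) by (apply Rmult_lt_compat_r; lra).
      replace (dl / Cabs a0 * Cabs a0) with dl in H by (field; lra). lra.
    + intro E. rewrite E, Cabs_0 in Habs. nra.
    + intros g Hg. rewrite Habs. apply (Hall t ltac:(lra) (fun t => g (Cabs a0 * (1 + t)))).
      unfold L'. apply in_map_iff. exists g; auto.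
Qed.

Lemma dense_none (L : list (R -> R)) dl : incr L -> 0 < dl ->
  exists z, chord (Some z) None < dl /\ goodrad L z.
Proof.
  intros HL Hdl.
  set (L' := map (fun g => fun t => - g (/ t)) L).
  assert (HL' : incr L').
  { intros h Hh x y Hx Hxy. unfold L' in Hh. apply in_map_iff in Hh. destruct Hh as [g [<- Hg]].
    assert (g (/ y) < g (/ x)); [|lra]. apply (HL g Hg).
    - apply Rinv_0_lt_compat; lra.
    - apply Rinv_lt_contravar; nra. }
  destruct (avoid_list L' HL' (dl/2) ltac:(lra)) as [t [Ht Hall]].
  exists (RtoC (/ t)).
  assert (Habs : Cabs (RtoC (/ t)) = / t)
    by (rewrite Cabs_RtoC; apply Rabs_pos_eq; apply Rlt_le, Rinv_0_lt_compat; lra).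
  split; [|split].
  - pose proof (chord_SN_le (RtoC (/ t))). rewrite Habs in H.
    assert (chord (Some (RtoC (/ t))) None <= 2 * t).
    { apply (Rmult_le_reg_r (/ t)); [apply Rinv_0_lt_compat; lra|].
      replace (2 * t * / t) with 2 by (field; lra). lra. }
    lra.
  - apply RtoC_neq0. apply Rgt_not_eq, Rinv_0_lt_compat; lra.
  - intros g Hg. rewrite Habs. intro E.
    apply (Hall t ltac:(lra) (fun t => - g (/ t))); [unfold L'; apply in_map_iff; exists g; auto| rewrite E; lra].
Qed.

Lemma dense_goodrad (L : list (R -> R)) (a : Chat) dl : incr L -> 0 < dl ->
  exists z, chord (Some z) a < dl /\ goodrad L z.
Proof.
  intros HL Hdl. destruct a as [a0|].
  - destruct (dense_some L a0 (dl / 2) HL ltac:(lra)) as [z [Hz Hg]].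
    exists z. split; auto. eapply Rle_lt_trans; [apply chord_SS_le| lra].
  - apply dense_none; auto.
Qed.

Definition Wof (b : Chat) : Cplx := match b with Some z => Cinv z | None => Czero end.

Lemma vcont_Wof_finite a0 : a0 <> Czero -> vcont Wof (Some a0).
Proof.
  intros Ha0 eps He.
  set (m := Cabs a0). assert (Hm : 0 < m) by (apply Cabs_pos; auto).
  set (A := 1 + m). assert (HA : 1 < A) by (unfold A; lra).
  set (cN := chord None (Some a0)).
  assert (HcN : 0 < cN) by (unfold cN; simpl; apply Rdiv_lt_0_compat; [lra| apply sqrt1N_pos]).
  set (dl := Rmin cN (Rmin (1 / A) (Rmin (m / (2 * (A * A))) (eps * (m * m) / (4 * (A * A)))))).
  assert (Hdl : 0 < dl) by (unfold dl; repeat apply Rmin_glb_lt; auto;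
    repeat (apply Rmult_lt_0_compat || apply Rdiv_lt_0_compat || apply Rinv_0_lt_compat); lra).
  assert (Hd1 : dl <= cN) by apply Rmin_l.
  assert (Hd2 : dl <= 1 / A) by (eapply Rle_trans; [apply Rmin_r| apply Rmin_l]).
  assert (Hd3 : dl <= m / (2 * (A * A)))
    by (eapply Rle_trans; [apply Rmin_r| eapply Rle_trans; [apply Rmin_r| apply Rmin_l]]).
  assert (Hd4 : dl <= eps * (m * m) / (4 * (A * A)))
    by (eapply Rle_trans; [apply Rmin_r| eapply Rle_trans; [apply Rmin_r| apply Rmin_r]]).
  exists dl. split; auto. intros b Hb. destruct b as [z|]; [| unfold cN in Hd1; lra].
  assert (HdA : dl * A <= 1).
  { apply (Rmult_le_reg_r (/ A)); [apply Rinv_0_lt_compat; lra|].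
    replace (dl * A * / A) with dl by (field; lra). unfold Rdiv in Hd2; lra. }
  pose proof (chord_SS_inv z a0 dl ltac:(lra) HdA) as Hz. fold m A in Hz.
  assert (HzA : Cabs (Csub z a0) <= m / 2).
  { eapply Rle_trans; [exact Hz|].
    apply Rle_trans with (m / (2 * (A * A)) * (A * A)); [apply Rmult_le_compat_r; nra| right; field; lra]. }
  assert (Hzm : m / 2 <= Cabs z) by (pose proof (Cabs_rev a0 z); rewrite Cabs_sub_sym in HzA; fold m in H; lra).
  assert (Hz0 : z <> Czero) by (intro E; rewrite E, Cabs_0 in Hzm; lra).
  simpl Wof. replace (Csub (Cinv z) (Cinv a0)) with (Cmul (Csub a0 z) (Cinv (Cmul z a0))) by (field; auto).
  rewrite Cabs_mul, Cabs_inv, Cabs_mul, Cabs_sub_sym. fold m.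
  assert (0 < Cabs z * m) by nra.
  apply Rle_lt_trans with (dl * (A * A) * / (m / 2 * m)).
  - apply Rmult_le_compat; auto; [apply Cabs_nonneg| left; apply Rinv_0_lt_compat; lra|].
    apply Rinv_le_contravar; [nra| apply Rmult_le_compat_r; lra].
  - apply Rle_lt_trans with (eps * (m * m) / (4 * (A * A)) * (A * A) * / (m / 2 * m)).
    + apply Rmult_le_compat_r; [left; apply Rinv_0_lt_compat; nra|]. apply Rmult_le_compat_r; nra.
    + replace (eps * (m * m) / (4 * (A * A)) * (A * A) * / (m / 2 * m)) with (eps / 2) by (field; lra). lra.
Qed.

Lemma vcont_Wof_infty : vcont Wof None.
Proof.
  intros eps He. exists (Rmin 1 eps). split; [apply Rmin_glb_lt; lra|]. intros b Hb. destruct b as [z|].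
  - assert (Hd : 0 < Rmin 1 eps <= 1) by (split; [apply Rmin_glb_lt; lra| apply Rmin_l]).
    pose proof (chord_SN_inv z _ Hd Hb) as Hz.
    assert (0 < 1 / Rmin 1 eps) by (apply Rdiv_lt_0_compat; lra).
    simpl Wof. replace (Csub (Cinv z) Czero) with (Cinv z) by ring. rewrite Cabs_inv.
    apply Rlt_le_trans with (Rmin 1 eps); [| apply Rmin_r].
    apply Rlt_le_trans with (/ (1 / Rmin 1 eps)); [apply Rinv_lt_contravar; nra| right; field; lra].
  - simpl. replace (Csub Czero Czero) with Czero by ring. rewrite Cabs_0. lra.
Qed.

Lemma vcont_Wof a : a <> Some Czero -> vcont Wof a.
Proof.
  intros Ha. destruct a as [a0|]; [| exact vcont_Wof_infty].
  apply vcont_Wof_finite. intro E; apply Ha; subst; auto.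
Qed.

Definition lipc (f : Cplx -> Cplx) (B Lc : R) := forall x y, Cabs x <= B -> Cabs y <= B ->
  Cabs (Csub (f x) (f y)) <= Lc * Cabs (Csub x y).

Lemma lip_comp f g B V L1 L2 : lipc f B L1 -> (forall x, Cabs x <= B -> Cabs (f x) <= V) ->
  lipc g V L2 -> 0 <= L2 -> lipc (fun x => g (f x)) B (L2 * L1).
Proof.
  intros Hf Hb Hg HL2 x y Hx Hy. eapply Rle_trans; [apply Hg; apply Hb; auto|].
  rewrite Rmult_assoc. apply Rmult_le_compat_l; auto.
Qed.

Lemma vcont_comp (f : Cplx -> Cplx) (G : Chat -> Cplx) a B Lc :
  vcont G a -> Cabs (G a) < B -> 0 <= Lc -> lipc f B Lc -> vcont (fun b => f (G b)) a.
Proof.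
  intros HG HB HL Hf eps He.
  set (eta := Rmin (B - Cabs (G a)) (eps / (Lc + 1))).
  assert (Heta : 0 < eta) by (apply Rmin_glb_lt; [lra| apply Rdiv_lt_0_compat; lra]).
  assert (He1 : eta <= B - Cabs (G a)) by apply Rmin_l.
  assert (He2 : eta <= eps / (Lc + 1)) by apply Rmin_r.
  destruct (HG eta Heta) as [dl [Hdl Hb]]. exists dl. split; auto. intros b Hbd. specialize (Hb b Hbd).
  assert (HGb : Cabs (G b) <= B) by (pose proof (Cabs_near (G b) (G a) _ (Rlt_le _ _ Hb)); lra).
  eapply Rle_lt_trans; [apply Hf; auto; lra|].
  apply Rle_lt_trans with (Lc * (eps / (Lc + 1))); [apply Rmult_le_compat_l; lra|].
  replace (Lc * (eps / (Lc + 1))) with (eps * (Lc / (Lc + 1))) by (field; lra).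
  assert (Lc / (Lc + 1) < 1)
    by (apply (Rmult_lt_reg_r (Lc + 1)); [lra|]; unfold Rdiv; rewrite Rmult_assoc, Rinv_l by lra; lra).
  assert (0 <= Lc / (Lc + 1)) by (unfold Rdiv; apply Rmult_le_pos; [lra| left; apply Rinv_0_lt_compat; lra]).
  nra.
Qed.

Definition eventually (P : R -> Prop) := exists dl, 0 < dl /\ forall s, 0 < s < dl -> P s.

Lemma ev_and P Q : eventually P -> eventually Q -> eventually (fun s => P s /\ Q s).
Proof.
  intros [a [Ha HP]] [b [Hb HQ]]. exists (Rmin a b). split; [apply Rmin_glb_lt; auto|].
  intros s Hs. pose proof (Rmin_l a b); pose proof (Rmin_r a b).
  split; [apply HP | apply HQ]; lra.
Qed.

Lemma ev_imp (P Q : R -> Prop) : eventually P -> (forall s, 0 < s -> P s -> Q s) -> eventually Q.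
Proof. intros [a [Ha HP]] H. exists a. split; auto. intros s Hs. apply H; [lra| apply HP; auto]. Qed.

Lemma ev_lt a : 0 < a -> eventually (fun s => s < a).
Proof. intros. exists a. split; auto. intros; lra. Qed.

Lemma lim_ev f l : lim_0plus f l -> forall eps, 0 < eps -> eventually (fun s => Rabs (f s - l) < eps).
Proof. intros H eps He. destruct (H eps He) as [dl [Hd Hs]]. exists dl; auto. Qed.

Lemma Rpower_pos x p : 0 < Rpower x p.
Proof. unfold Rpower. apply exp_pos. Qed.

Lemma Rpower_le_exp s p q : 0 < s <= 1 -> p <= q -> Rpower s q <= Rpower s p.
Proof.
  intros Hs Hpq. unfold Rpower. destruct (Req_dec q p) as [->|Hne]; [lra|].
  assert (ln s <= 0)
    by (rewrite <- ln_1; destruct (Req_dec s 1) as [->|]; [lra| left; apply ln_increasing; lra]).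
  destruct (Req_dec (ln s) 0) as [E|E].
  - rewrite E, !Rmult_0_r. lra.
  - left. apply exp_increasing. nra.
Qed.

Lemma Rpower_le1 s p : 0 < s <= 1 -> 0 <= p -> Rpower s p <= 1.
Proof. intros Hs Hp. pose proof (Rpower_le_exp s 0 p Hs Hp). rewrite Rpower_O in H by lra. exact H. Qed.

Lemma Rpower_small p : 0 < p -> forall eps, 0 < eps -> eventually (fun s => Rpower s p < eps).
Proof.
  intros Hp eps He. exists (Rpower eps (/ p)). split; [apply Rpower_pos|].
  intros s Hs. replace eps with (Rpower (Rpower eps (/ p)) p).
  - apply Rlt_Rpower_l; lra.
  - rewrite Rpower_mult, Rinv_l by lra. apply Rpower_1; auto.
Qed.

Lemma Rpower_div s p q : Rpower s p / Rpower s q = Rpower s (p - q).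
Proof. unfold Rminus. rewrite Rpower_plus, Rpower_Ropp. reflexivity. Qed.

Lemma inv_INR_nonneg m : 0 <= / INR m.
Proof.
  pose proof (pos_INR m). destruct H as [H|H];
    [left; apply Rinv_0_lt_compat; auto| rewrite <- H, Rinv_0; lra].
Qed.

Lemma inv_INR_pos m : (1 <= m)%nat -> 0 < / INR m.
Proof. intro. apply Rinv_0_lt_compat. apply lt_0_INR. lia. Qed.

Lemma sum_inv_S m d : sum_inv (S m) d = sum_inv m d + / INR (d (S m)).
Proof.
  unfold sum_inv. rewrite seq_S, map_app, fold_right_app. simpl.
  replace (1 + m)%nat with (S m) by lia. rewrite Rplus_0_r.
  induction (map (fun i => / INR (d i)) (seq 1 m)); simpl; [ring| rewrite IHl; ring].
Qed.

Lemma sum_inv_nonneg m d : 0 <= sum_inv m d.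
Proof.
  induction m; [unfold sum_inv; simpl; lra|].
  rewrite sum_inv_S. pose proof (inv_INR_nonneg (d (S m))). lra.
Qed.

Lemma sum_inv_mono m1 m2 d : (m1 <= m2)%nat -> sum_inv m1 d <= sum_inv m2 d.
Proof.
  intro H. induction H; [lra|]. rewrite sum_inv_S. pose proof (inv_INR_nonneg (d (S m))). lra.
Qed.

Lemma pow_le_self x m : 0 <= x <= 1 -> (1 <= m)%nat -> x ^ m <= x.
Proof.
  intros Hx Hm. destruct m; [lia|]. simpl.
  assert (x ^ m <= 1) by (rewrite <- (pow1 m); apply pow_incr; lra). nra.
Qed.

Lemma pow_lt_strict x y m : 0 <= x < y -> (1 <= m)%nat -> x ^ m < y ^ m.
Proof.
  intros Hxy Hm. induction m; [lia|]. destruct m; [simpl; lra|].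
  assert (IH : x ^ S m < y ^ S m) by (apply IHm; lia).
  change (x ^ S (S m)) with (x * x ^ S m). change (y ^ S (S m)) with (y * y ^ S m).
  pose proof (pow_le x (S m) ltac:(lra)).
  apply Rle_lt_trans with (x * y ^ S m); [apply Rmult_le_compat_l; lra| apply Rmult_lt_compat_r; lra].
Qed.

Lemma pow_inj x y m : 0 <= x -> 0 <= y -> (1 <= m)%nat -> x ^ m = y ^ m -> x = y.
Proof.
  intros Hx Hy Hm E. destruct (Rtotal_order x y) as [H|[H|H]]; auto.
  - pose proof (pow_lt_strict x y m ltac:(lra) Hm). lra.
  - pose proof (pow_lt_strict y x m ltac:(lra) Hm). lra.
Qed.

Lemma caux_pos n d s k : 0 < caux n d s k.
Proof. induction k; simpl; [apply Rpower_pos| apply Rmult_lt_0_compat; auto; apply Rpower_pos]. Qed.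

Lemma cc_pos n d s i : 0 < cc n d s i.
Proof. apply caux_pos. Qed.

Lemma caux_upper n d s k : 0 < s <= 1 -> caux n d s k <= caux n d s 0.
Proof.
  intros Hs. induction k; [lra|].
  change (caux n d s (S k)) with (Rpower s (/ INR (d (S (S k)))) * caux n d s k).
  pose proof (Rpower_le1 s (/ INR (d (S (S k)))) Hs (inv_INR_nonneg _)).
  pose proof (caux_pos n d s k). pose proof (Rpower_pos s (/ INR (d (S (S k))))). nra.
Qed.

(** [c_{k+1} >= s^{1/d_1 + ... + 1/d_{k+1}}], since [d_max^2 >= 1]. *)
Lemma caux_lower n d s k : 0 < s <= 1 -> (1 <= dmax n d)%nat ->
  Rpower s (sum_inv (S k) d) <= caux n d s k.
Proof.
  intros Hs Hd. induction k.
  - simpl caux. unfold sum_inv; simpl. rewrite Rplus_0_r.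
    apply Rle_Rpower_l; [apply inv_INR_nonneg|]. split; [lra|].
    apply le_INR in Hd. simpl in Hd. assert (1 <= INR (dmax n d) ^ 2) by (simpl; nra). nra.
  - change (caux n d s (S k)) with (Rpower s (/ INR (d (S (S k)))) * caux n d s k).
    rewrite sum_inv_S, Rplus_comm, Rpower_plus.
    apply Rmult_le_compat_l; [left; apply Rpower_pos| auto].
Qed.

(** ** Inner and outer forms of [R_n] *)

Definition prodl (f : nat -> Cplx) (l : list nat) := fold_right Cmul Cone (map f l).

Lemma prodl_mul f g l : prodl (fun i => Cmul (f i) (g i)) l = Cmul (prodl f l) (prodl g l).
Proof. unfold prodl; induction l; simpl; [ring|]. rewrite IHl. ring. Qed.

Lemma prodl_ext f g l : (forall i, In i l -> f i = g i) -> prodl f l = prodl g l.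
Proof.
  intro H. unfold prodl. f_equal. apply map_ext_in. exact H.
Qed.

Lemma prodl_neq0 f l : (forall i, In i l -> f i <> Czero) -> prodl f l <> Czero.
Proof.
  induction l; intros H; simpl; [apply Cone_neq0|]. unfold prodl in *; simpl.
  apply Cmul_neq0; [apply H; left; auto| apply IHl; intros; apply H; right; auto].
Qed.

Lemma prodl_one l : prodl (fun _ => Cone) l = Cone.
Proof. unfold prodl. induction l; cbn [map fold_right]; auto. rewrite IHl; ring. Qed.

(** [cpw i = c_i^{D_i}]; near [0] the factor [z^{D_i} - c_i^{D_i}] is
    [-c_i^{D_i} (1 - z^{D_i}/c_i^{D_i})], near [infty] it is
    [z^{D_i} (1 - c_i^{D_i}/z^{D_i})]. *)
Definition cpw (n : nat) (d : nat -> nat) (s : R) (i : nat) : R := cc n d s i ^ Dd d i.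

Lemma cpw_pos n d s i : 0 < cpw n d s i.
Proof. unfold cpw. apply pow_lt, cc_pos. Qed.

Definition kap n d s i : R := if Nat.odd i then / (- cpw n d s i) else - cpw n d s i.
Definition gin n d s i (w : Cplx) : Cplx :=
  let e := Csub Cone (Cmul (Cpow w (Dd d i)) (RtoC (/ cpw n d s i))) in
  if Nat.odd i then Cinv e else e.
Definition gout n d s i (z : Cplx) : Cplx :=
  let e := Csub Cone (Cmul (RtoC (cpw n d s i)) (Cpow (Cinv z) (Dd d i))) in
  if Nat.odd i then Cinv e else e.

Definition Ccst n d s := prodl (fun i => RtoC (kap n d s i)) (seq 1 (n - 1)).
Definition Fin n d s w := prodl (fun i => gin n d s i w) (seq 1 (n - 1)).
Definition Eout n d s z := prodl (fun i => gout n d s i z) (seq 1 (n - 1)).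

Lemma Ccst_neq0 n d s : Ccst n d s <> Czero.
Proof.
  unfold Ccst. apply prodl_neq0. intros i _. apply RtoC_neq0. unfold kap.
  pose proof (cpw_pos n d s i). destruct (Nat.odd i); [apply Rinv_neq_0_compat|]; lra.
Qed.

Lemma ffactor_in n d s i w :
  ffactor n d s i w = Cmul (RtoC (kap n d s i)) (gin n d s i w).
Proof.
  pose proof (cpw_pos n d s i) as Hc.
  unfold ffactor, kap, gin, fbase. fold (cpw n d s i).
  assert (E : Csub (Cpow w (Dd d i)) (RtoC (cpw n d s i)) =
              Cmul (RtoC (- cpw n d s i)) (Csub Cone (Cmul (Cpow w (Dd d i)) (RtoC (/ cpw n d s i))))).
  { rewrite RtoC_opp, RtoC_inv by lra. field. apply RtoC_neq0; lra. }
  rewrite E. destruct (Nat.odd i); [| reflexivity].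
  rewrite Cinv_mul, <- (RtoC_inv (- cpw n d s i)) by lra. reflexivity.
Qed.

Lemma Rn_inner n d s S T w : Rn n d s S T w =
  Cadd (Cmul (Cmul (RtoC S) (Cinv (Cpow w (d n)))) (Cmul (Ccst n d s) (Fin n d s w))) (RtoC T).
Proof.
  unfold Rn. f_equal. unfold Cdiv. f_equal.
  unfold Ccst, Fin. rewrite <- prodl_mul. unfold prodl. f_equal. apply map_ext_in.
  intros i _. apply ffactor_in.
Qed.

Lemma odd_S_neg i : Nat.odd (S i) = negb (Nat.odd i).
Proof. rewrite Nat.odd_succ, <- Nat.negb_odd. reflexivity. Qed.

(** Grouping the factors in consecutive pairs [(2j-1, 2j)]: the powers of [z]
    telescope, [z^{d_j} z^{-D_j} z^{D_{j+1}} = z^{d_{j+2}}]. *)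
Lemma pair_prod n d s z : z <> Czero -> forall p j, Nat.odd j = true ->
  Cmul (Cpow z (d j)) (prodl (fun i => ffactor n d s i z) (seq j (2 * p))) =
  Cmul (Cpow z (d (j + 2 * p)%nat)) (prodl (fun i => gout n d s i z) (seq j (2 * p))).
Proof.
  intros Hz p. induction p; intros j Hj.
  - rewrite Nat.add_0_r. reflexivity.
  - replace (seq j (2 * S p)) with (j :: S j :: seq (S (S j)) (2 * p))
      by (replace (2 * S p)%nat with (S (S (2*p))) by lia; reflexivity).
    unfold prodl. cbn [map fold_right].
    fold (prodl (fun i => ffactor n d s i z) (seq (S (S j)) (2 * p))).
    fold (prodl (fun i => gout n d s i z) (seq (S (S j)) (2 * p))).
    assert (Hj2 : Nat.odd (S (S j)) = true) by (rewrite !odd_S_neg, Hj; reflexivity).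
    replace (j + 2 * S p)%nat with (S (S j) + 2 * p)%nat by lia.
    set (R1 := prodl (fun i => ffactor n d s i z) (seq (S (S j)) (2 * p))).
    set (G1 := prodl (fun i => gout n d s i z) (seq (S (S j)) (2 * p))).
    transitivity (Cmul (gout n d s j z) (Cmul (gout n d s (S j) z) (Cmul (Cpow z (d (S (S j)))) R1))).
    2:{ unfold R1; rewrite IHp by exact Hj2. fold G1. ring. }
    unfold ffactor, gout, fbase. rewrite Hj, odd_S_neg, Hj. simpl negb. cbv iota.
    fold (cpw n d s j). fold (cpw n d s (S j)).
    assert (HB : forall i, Csub (Cpow z (Dd d i)) (RtoC (cpw n d s i)) =
       Cmul (Cpow z (Dd d i)) (Csub Cone (Cmul (RtoC (cpw n d s i)) (Cpow (Cinv z) (Dd d i))))).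
    { intro i. rewrite Cpow_inv. field. apply Cpow_neq0; auto. }
    rewrite !HB, Cinv_mul.
    set (e1 := Cinv (Csub Cone (Cmul (RtoC (cpw n d s j)) (Cpow (Cinv z) (Dd d j))))).
    set (e2 := Csub Cone (Cmul (RtoC (cpw n d s (S j))) (Cpow (Cinv z) (Dd d (S j))))).
    unfold Dd. rewrite !Cpow_add, !Cinv_mul.
    field. repeat split; apply Cpow_neq0; auto.
Qed.

Lemma Rn_outer n d s S T z : z <> Czero -> Nat.odd n = true ->
  Rn n d s S T z = Cadd (Cmul (Cmul (RtoC S) (Cpow (Cinv z) (d 1%nat))) (Eout n d s z)) (RtoC T).
Proof.
  intros Hz Ho. destruct (Nat.Even_or_Odd n) as [[q Hq]|[q Hq]].
  { exfalso. subst n. rewrite Nat.odd_mul in Ho. simpl in Ho. discriminate. }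
  assert (Hn1 : (n - 1 = 2 * q)%nat) by lia.
  pose proof (pair_prod n d s z Hz q 1%nat eq_refl) as HP.
  replace (1 + 2 * q)%nat with n in HP by lia.
  unfold Rn, Eout. rewrite Hn1. f_equal. unfold Cdiv.
  fold (prodl (fun i => ffactor n d s i z) (seq 1 (2 * q))).
  assert (E : prodl (fun i => ffactor n d s i z) (seq 1 (2 * q)) =
     Cmul (Cinv (Cpow z (d 1%nat))) (Cmul (Cpow z (d n)) (prodl (fun i => gout n d s i z) (seq 1 (2 * q))))).
  { rewrite <- HP. field. apply Cpow_neq0; auto. }
  rewrite E, Cpow_inv. field. split; apply Cpow_neq0; auto.
Qed.

Lemma fac_inv_est x t : Cabs x <= t -> t <= 1/2 -> Cabs (Csub (Cinv (Csub Cone x)) Cone) <= 2 * t.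
Proof.
  intros Hx Ht.
  assert (He : 1 - t <= Cabs (Csub Cone x)) by (pose proof (Cabs_rev Cone x); rewrite Cabs_1 in H; lra).
  assert (Hne : Csub Cone x <> Czero) by (intro E; rewrite E, Cabs_0 in He; lra).
  replace (Csub (Cinv (Csub Cone x)) Cone) with (Cmul x (Cinv (Csub Cone x))) by (field; auto).
  rewrite Cabs_mul, Cabs_inv. pose proof (Cabs_nonneg x).
  apply Rle_trans with (t * / (1/2)); [| lra].
  apply Rmult_le_compat; auto; [left; apply Rinv_0_lt_compat; lra|]. apply Rinv_le_contravar; lra.
Qed.

Lemma fac_est x t : Cabs x <= t -> t <= 1/2 -> Cabs (Csub (Csub Cone x) Cone) <= 2 * t.
Proof.
  intros. replace (Csub (Csub Cone x) Cone) with (Copp x) by ring. rewrite Cabs_opp.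
  pose proof (Cabs_nonneg x). lra.
Qed.

Lemma prod_est l f e : 0 <= e -> (forall i, In i l -> Cabs (Csub (f i) Cone) <= e) ->
  Cabs (Csub (prodl f l) Cone) <= (1 + e) ^ (length l) - 1.
Proof.
  intros He. unfold prodl. induction l as [|a l IH]; intros H; simpl.
  - replace (Csub Cone Cone) with Czero by ring. rewrite Cabs_0. lra.
  - set (P := fold_right Cmul Cone (map f l)) in *.
    assert (HP : Cabs (Csub P Cone) <= (1 + e) ^ length l - 1) by (apply IH; intros; apply H; right; auto).
    assert (Ha : Cabs (Csub (f a) Cone) <= e) by (apply H; left; auto).
    replace (Csub (Cmul (f a) P) Cone) with (Cadd (Cmul (f a) (Csub P Cone)) (Csub (f a) Cone)) by ring.
    eapply Rle_trans; [apply Cabs_triangle|]. rewrite Cabs_mul.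
    assert (Hfa : Cabs (f a) <= 1 + e) by (pose proof (Cabs_near (f a) Cone e Ha); rewrite Cabs_1 in H0; lra).
    pose proof (Cabs_nonneg (Csub P Cone)). pose proof (Cabs_nonneg (f a)).
    assert (Cabs (f a) * Cabs (Csub P Cone) <= (1 + e) * ((1 + e) ^ length l - 1)) by (apply Rmult_le_compat; lra).
    lra.
Qed.

Lemma pow_est e m : 0 <= e <= 1 -> (1 + e) ^ m - 1 <= e * 2 ^ m.
Proof.
  intros He. assert (H : (1 + e) ^ m - 1 <= e * (2 ^ m - 1)); [|nra].
  induction m; simpl; [lra|].
  assert (1 <= 2 ^ m) by (clear; induction m; simpl; lra).
  assert (0 <= (1 + e) ^ m) by (apply pow_le; lra).
  assert (e * e * (2 ^ m - 1) <= e * (2 ^ m - 1)) by (apply Rmult_le_compat_r; nra).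
  nra.
Qed.

Lemma prod_est2 l f t : 0 <= t -> 2 * t <= 1 -> (forall i, In i l -> Cabs (Csub (f i) Cone) <= 2 * t) ->
  Cabs (Csub (prodl f l) Cone) <= 2 * t * 2 ^ (length l).
Proof.
  intros. eapply Rle_trans; [apply (prod_est l f (2 * t)); [lra| exact H1]|]. apply pow_est. lra.
Qed.

Lemma gin_est n d s i w t : (1 <= Dd d i)%nat -> 0 <= t <= 1/2 -> Cabs w <= t * cc n d s i ->
  Cabs (Csub (gin n d s i w) Cone) <= 2 * t.
Proof.
  intros HD Ht Hw. pose proof (cc_pos n d s i) as Hc.
  assert (Hx : Cabs (Cmul (Cpow w (Dd d i)) (RtoC (/ cpw n d s i))) <= t).
  { rewrite Cabs_mul, Cabs_pow, Cabs_RtoC. unfold cpw.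
    rewrite Rabs_pos_eq by (left; apply Rinv_0_lt_compat, pow_lt; lra).
    rewrite <- pow_inv, <- Rpow_mult_distr.
    pose proof (Cabs_nonneg w).
    assert (Cabs w * / cc n d s i <= t).
    { apply (Rmult_le_reg_r (cc n d s i)); auto. rewrite Rmult_assoc, Rinv_l by lra. lra. }
    assert (0 <= Cabs w * / cc n d s i) by (apply Rmult_le_pos; [lra| left; apply Rinv_0_lt_compat; lra]).
    eapply Rle_trans; [apply pow_le_self; [lra| auto]| lra]. }
  unfold gin. destruct (Nat.odd i); [apply fac_inv_est| apply fac_est]; lra.
Qed.

Lemma gout_est n d s i z t B : (1 <= Dd d i)%nat -> 0 <= t <= 1/2 -> Cabs (Cinv z) <= B ->
  cc n d s i * B <= t -> Cabs (Csub (gout n d s i z) Cone) <= 2 * t.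
Proof.
  intros HD Ht Hz HB. pose proof (cc_pos n d s i) as Hc.
  assert (Hx : Cabs (Cmul (RtoC (cpw n d s i)) (Cpow (Cinv z) (Dd d i))) <= t).
  { rewrite Cabs_mul, Cabs_pow, Cabs_RtoC. unfold cpw.
    rewrite Rabs_pos_eq by (left; apply pow_lt; lra).
    rewrite <- Rpow_mult_distr. pose proof (Cabs_nonneg (Cinv z)).
    assert (cc n d s i * Cabs (Cinv z) <= t) by (eapply Rle_trans; [| exact HB]; apply Rmult_le_compat_l; lra).
    assert (0 <= cc n d s i * Cabs (Cinv z)) by (apply Rmult_le_pos; lra).
    eapply Rle_trans; [apply pow_le_self; [lra| auto]| lra]. }
  unfold gout. destruct (Nat.odd i); [apply fac_inv_est| apply fac_est]; lra.
Qed.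

Lemma Fin_0 n d s : (forall i, In i (seq 1 (n - 1)) -> (1 <= Dd d i)%nat) -> Fin n d s Czero = Cone.
Proof.
  intros HD. unfold Fin. rewrite <- (prodl_one (seq 1 (n - 1))). apply prodl_ext.
  intros i Hi. unfold gin. rewrite Cpow_0 by auto.
  replace (Csub Cone (Cmul Czero (RtoC (/ cpw n d s i)))) with Cone by ring.
  destruct (Nat.odd i); auto. cunf; apply Ceq; field.
Qed.

Lemma prod_near1 (l : list nat) eta : 0 < eta -> exists t, 0 < t <= 1/4 /\
  forall f, (forall i, In i l -> Cabs (Csub (f i) Cone) <= 2 * t) -> Cabs (Csub (prodl f l) Cone) <= eta.
Proof.
  intros He. assert (H2 : 0 < 2 ^ length l) by (apply pow_lt; lra).
  set (t := Rmin (1/4) (eta / (2 * 2 ^ length l))).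
  assert (Ht1 : t <= 1/4) by apply Rmin_l.
  assert (Ht2 : t <= eta / (2 * 2 ^ length l)) by apply Rmin_r.
  assert (Ht : 0 < t) by (apply Rmin_glb_lt; [lra| apply Rdiv_lt_0_compat; lra]).
  exists t. split; [lra|]. intros f Hf.
  eapply Rle_trans; [apply (prod_est2 l f t); [lra| lra| exact Hf]|].
  apply (Rmult_le_reg_r (/ (2 * 2 ^ length l))); [apply Rinv_0_lt_compat; lra|].
  replace (2 * t * 2 ^ length l * / (2 * 2 ^ length l)) with t by (field; lra). exact Ht2.
Qed.

Lemma div_close a F q A e dl : Cabs (Csub F Cone) <= e -> e <= 1/2 -> Cmul a F = q ->
  Cabs (Csub q A) <= dl -> Cabs (Csub a A) <= 2 * (dl + Cabs A * e).
Proof.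
  intros HF He Ha Hq.
  assert (HF2 : 1/2 <= Cabs F) by (pose proof (Cabs_rev Cone F); rewrite Cabs_1, Cabs_sub_sym in H; lra).
  assert (HF0 : F <> Czero) by (intro E; rewrite E, Cabs_0 in HF2; lra).
  replace (Csub a A) with (Cmul (Cadd (Csub q A) (Cmul A (Csub Cone F))) (Cinv F)) by (rewrite <- Ha; field; auto).
  rewrite Cabs_mul, Cabs_inv. pose proof (Cabs_triangle (Csub q A) (Cmul A (Csub Cone F))).
  rewrite Cabs_mul, (Cabs_sub_sym Cone F) in H. pose proof (Cabs_nonneg A).
  assert (Cabs A * Cabs (Csub F Cone) <= Cabs A * e) by (apply Rmult_le_compat_l; lra).
  assert (0 < / Cabs F <= 2).
  { split; [apply Rinv_0_lt_compat; lra|]. replace 2 with (/ (1/2)) by field. apply Rinv_le_contravar; lra. }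
  pose proof (Cabs_nonneg (Cadd (Csub q A) (Cmul A (Csub Cone F)))). nra.
Qed.

Lemma q_close x y T m B rho tau : Rabs (x - y) <= rho -> rho <= 1 -> Rabs y + 1 <= B -> Rabs T <= tau ->
  Rabs ((1 - T) * x ^ m - y ^ m) <= INR m * B ^ m * rho + tau * B ^ m.
Proof.
  intros Hx Hr Hy HT.
  assert (HB : 1 <= B) by (pose proof (Rabs_pos y); lra).
  assert (Hxb : Rabs x <= B) by (pose proof (Rabs_triang (x - y) y); replace (x - y + y) with x in H by ring; lra).
  replace ((1 - T) * x ^ m - y ^ m) with ((x ^ m - y ^ m) - T * x ^ m) by ring.
  eapply Rle_trans; [apply Rabs_triang|]. rewrite Rabs_Ropp, Rabs_mult, <- RPow_abs.
  pose proof (Rpow_lip x y m B HB Hxb ltac:(lra)).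
  assert (Rabs x ^ m <= B ^ m) by (apply pow_incr; split; [apply Rabs_pos| auto]).
  assert (0 <= INR m * B ^ m) by (apply Rmult_le_pos; [apply pos_INR| apply pow_le; lra]).
  assert (Rabs T * Rabs x ^ m <= tau * B ^ m) by (apply Rmult_le_compat; try lra; [apply Rabs_pos| apply pow_le, Rabs_pos]).
  assert (INR m * B ^ m * Rabs (x - y) <= INR m * B ^ m * rho) by (apply Rmult_le_compat_l; lra).
  lra.
Qed.

Lemma Wp_close (x y : R) (W P : Cplx) (al : R) (m : nat) (B1 X zeta : R) :
  Cabs W <= B1 -> 1 <= B1 -> 1 <= X -> Rabs x <= X -> Rabs y <= X -> Rabs (x - y) <= zeta ->
  0 < al -> al = y ^ m -> Cabs (Csub P (RtoC al)) <= zeta -> al / 2 <= Cabs P ->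
  Cabs (Csub (Cdiv (Cpow (Cmul (RtoC x) W) m) P) (Cpow W m)) <= B1 ^ m * (INR m * X ^ m + 1) * (2 / al) * zeta.
Proof.
  intros HW HB1 HX Hx Hy Hxy Hal Hay HP HPa.
  assert (HP0 : P <> Czero) by (intro E; rewrite E, Cabs_0 in HPa; lra).
  replace (Csub (Cdiv (Cpow (Cmul (RtoC x) W) m) P) (Cpow W m))
    with (Cmul (Cpow W m) (Cmul (Csub (RtoC (x ^ m)) P) (Cinv P))) by (rewrite Cpow_mulb, Cpow_RtoC; field; auto).
  rewrite !Cabs_mul, Cabs_pow, Cabs_inv.
  assert (H1 : Cabs W ^ m <= B1 ^ m) by (apply pow_incr; split; [apply Cabs_nonneg| auto]).
  assert (H2 : Cabs (Csub (RtoC (x ^ m)) P) <= (INR m * X ^ m + 1) * zeta).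
  { replace (Csub (RtoC (x ^ m)) P) with (Cadd (RtoC (x ^ m - y ^ m)) (Csub (RtoC al) P)) by (rewrite RtoC_sub, Hay; ring).
    eapply Rle_trans; [apply Cabs_triangle|]. rewrite Cabs_RtoC, Cabs_sub_sym.
    pose proof (Rpow_lip x y m X HX Hx Hy).
    assert (INR m * X ^ m * Rabs (x - y) <= INR m * X ^ m * zeta)
      by (apply Rmult_le_compat_l; [apply Rmult_le_pos; [apply pos_INR| apply pow_le; lra]| auto]).
    lra. }
  assert (H3 : / Cabs P <= 2 / al) by (replace (2 / al) with (/ (al / 2)) by (field; lra); apply Rinv_le_contravar; lra).
  pose proof (pow_le (Cabs W) m (Cabs_nonneg W)). pose proof (Cabs_nonneg (Csub (RtoC (x ^ m)) P)).
  assert (0 <= / Cabs P) by (left; apply Rinv_0_lt_compat; lra).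
  apply Rle_trans with (B1 ^ m * ((INR m * X ^ m + 1) * zeta * (2 / al))).
  - apply Rmult_le_compat; auto; [apply Rmult_le_pos; auto|]. apply Rmult_le_compat; auto.
  - right. ring.
Qed.

Lemma Wprime_bound (x X B1 al : R) (W P : Cplx) (m : nat) :
  0 < al -> Rabs x <= X -> Cabs W <= B1 -> al / 2 <= Cabs P ->
  Cabs (Cdiv (Cpow (Cmul (RtoC x) W) m) P) <= 2 * (X * B1) ^ m / al.
Proof.
  intros Hal Hx HW HP. rewrite Cabs_div, Cabs_pow, Cabs_mul, Cabs_RtoC.
  pose proof (Rabs_pos x); pose proof (Cabs_nonneg W).
  apply Rle_trans with ((X * B1) ^ m / (al / 2)); [| right; field; lra].
  unfold Rdiv. apply Rmult_le_compat;
    [apply pow_le, Rmult_le_pos; lra| left; apply Rinv_0_lt_compat; lra| |apply Rinv_le_contravar; lra].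
  apply pow_incr. split; [apply Rmult_le_pos; lra| apply Rmult_le_compat; lra].
Qed.

Lemma psi_inv_eq z0 sg z : 0 < z0 -> 0 < sg -> z <> Some Czero ->
  psi_inv z0 z = Some (Cmul (RtoC sg) (Cmul (RtoC (z0 / sg)) (Wof z))).
Proof.
  intros Hz Hs Hn. destruct z as [z|]; unfold psi_inv, Wof.
  - destruct (Ceq_dec z) as [E|E]; [subst; congruence|]. f_equal. unfold Rdiv. rewrite RtoC_mul, RtoC_inv by lra.
    field. split; auto. apply RtoC_neq0; lra.
  - f_equal. ring.
Qed.

Lemma psi_inv_psi z0 y : z0 <> 0 -> psi_inv z0 (psi z0 y) = y.
Proof.
  intros Hz. destruct y as [y|]; unfold psi.
  - destruct (Ceq_dec y) as [E|E]; [subst; reflexivity|].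
    unfold psi_inv. destruct (Ceq_dec (Cdiv (RtoC z0) y)) as [E2|E2].
    + exfalso. apply (RtoC_neq0 z0 Hz). transitivity (Cmul (Cdiv (RtoC z0) y) y); [field; auto| rewrite E2; ring].
    + f_equal. field. split; auto. apply RtoC_neq0; auto.
  - unfold psi_inv. destruct (Ceq_dec Czero); [auto| congruence].
Qed.

Lemma psi_hc z0 sg v : z0 <> 0 -> 0 < sg -> psi z0 (Some (Cmul (RtoC sg) v)) = hc (RtoC (z0 / sg)) v.
Proof.
  intros Hz Hs. unfold psi, hc.
  destruct (Ceq_dec (Cmul (RtoC sg) v)) as [E|E]; destruct (Ceq_dec v) as [E2|E2]; auto.
  - exfalso. apply E2. transitivity (Cmul (Cinv (RtoC sg)) (Cmul (RtoC sg) v)); [field; apply RtoC_neq0; lra| rewrite E; ring].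
  - exfalso. apply E. subst. ring.
  - f_equal. unfold Rdiv. rewrite RtoC_mul, RtoC_inv by lra. field. split; auto. apply RtoC_neq0; lra.
Qed.

Definition Wrel (y : Chat) (W : Cplx) := (y = None /\ W = Czero) \/ (exists z, y = Some z /\ Cmul z W = Cone).

Lemma Wrel_Wof b : b <> Some Czero -> Wrel b (Wof b).
Proof.
  intros Hb. destruct b as [z|]; [| left; auto].
  right; exists z; split; auto; simpl; field; intro E; apply Hb; subst; auto.
Qed.

Lemma Wrel_hc P Q : P <> Czero -> Wrel (hc P Q) (Cdiv Q P).
Proof.
  intros HP. unfold hc. destruct (Ceq_dec Q) as [->|HQ].
  - left. split; auto. unfold Cdiv. ring.
  - right. exists (Cdiv P Q). split; auto. field; auto.
Qed.

Lemma ball_lemma w : w <> Some Czero -> exists r B, 0 < r /\ 0 < B /\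
  forall z, chord z w < r -> z <> Some Czero /\ Cabs (Wof z) <= B.
Proof.
  intros Hw. set (c := chord w (Some Czero)).
  assert (Hc : 0 < c).
  { pose proof (chord_nonneg w (Some Czero)). destruct H; auto. exfalso. apply Hw, chord_eq0. auto. }
  exists (c / 2), (4 / c). split; [lra|]. split; [apply Rdiv_lt_0_compat; lra|].
  intros z Hz. pose proof (chord_tri w z (Some Czero)). rewrite chord_sym in Hz. fold c in H.
  assert (Hz0 : c / 2 < chord z (Some Czero)) by lra.
  split.
  - intro E. subst. rewrite chord_refl in Hz0. lra.
  - destruct z as [z|]; simpl Wof.
    + pose proof (chord_SS_le z Czero). replace (Csub z Czero) with z in H0 by ring.
      assert (Hzz : c / 4 < Cabs z) by lra.
      rewrite Cabs_inv. left. replace (4 / c) with (/ (c / 4)) by (field; lra).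
      apply Rinv_lt_contravar; [nra| lra].
    + rewrite Cabs_0. left. apply Rdiv_lt_0_compat; lra.
Qed.

Lemma loc_unif_of_hc_approx (F : R -> Chat -> Chat) (G : Chat -> Chat) (c : R) (g : Cplx -> Cplx) :
  0 < c ->
  (forall a, a <> Some Czero -> G a = hc (RtoC c) (g (Wof a))) ->
  (forall B, 0 < B -> exists M, forall W, Cabs W <= B -> Cabs (g W) <= M) ->
  (forall B, 0 < B -> exists C, 0 < C /\ forall zeta, 0 < zeta <= 1 ->
     eventually (fun s => forall z, z <> Some Czero -> Cabs (Wof z) <= B -> exists P Q,
       F s z = hc P Q /\ Cabs (Csub P (RtoC c)) <= zeta /\ Cabs (Csub Q (g (Wof z))) <= C * zeta)) ->
  loc_unif_conv_0plus F G.
Proof.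
  intros Hc HG Hg Happ w Hw. destruct (ball_lemma w Hw) as [r [B [Hr [HB Hball]]]].
  exists r. split; auto. split; [intros z Hz; apply Hball; auto|].
  intros eps He. destruct (Hg B HB) as [M HM]. destruct (Happ B HB) as [C [HC HFz]].
  destruct (hc_uniform c (Rmax c M) eps Hc He) as [z0 [Hz0 Hclose]].
  set (zeta := Rmin 1 (Rmin z0 (z0 / C))).
  assert (Hz1 : zeta <= 1) by apply Rmin_l.
  assert (Hz2 : zeta <= z0) by (eapply Rle_trans; [apply Rmin_r| apply Rmin_l]).
  assert (Hz3 : zeta <= z0 / C) by (eapply Rle_trans; [apply Rmin_r| apply Rmin_r]).
  assert (Hz : 0 < zeta) by (apply Rmin_glb_lt; [lra| apply Rmin_glb_lt; [lra| apply Rdiv_lt_0_compat; lra]]).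
  assert (HCz : C * zeta <= z0)
    by (apply Rle_trans with (C * (z0 / C)); [apply Rmult_le_compat_l; lra| right; field; lra]).
  destruct (HFz zeta (conj Hz Hz1)) as [dl [Hdl Hev]].
  exists dl. split; auto. intros s Hs z Hzw. destruct (Hball z Hzw) as [Hz0w HWB].
  destruct (Hev s Hs z Hz0w HWB) as [P [Q [HF [HP HQ]]]].
  rewrite HF, HG by auto. pose proof (HM _ HWB).
  pose proof (Rmax_l c M); pose proof (Rmax_r c M).
  apply Hclose; try rewrite Cabs_RtoC, Rabs_pos_eq; lra.
Qed.

(** ** Uniform asymptotics of [R_n] as [s -> 0+] *)

Section Asymptotics.

Variables (n : nat) (d : nat -> nat) (Sn Tn z0 : R -> R).
Hypothesis n_ge3 : (3 <= n)%nat.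
Hypothesis n_odd : Nat.odd n = true.
Hypothesis d_ge1 : forall i, (1 <= i <= n)%nat -> (1 <= d i)%nat.
Hypothesis sum_lt1 : sum_inv n d < 1.
Hypothesis z0_fixed : eventually (fun s => Rn n d s (Sn s) (Tn s) (RtoC (z0 s)) = RtoC 1).
Hypothesis Sn_lim : lim_0plus (fun s => Sn s / Rpower s (nu n d)) (mu n d).
Hypothesis Tn_lim : lim_0plus (fun s => Tn s / Rpower s (nu n d)) ((INR (d 1%nat * d n) - 1) * mu n d).
Hypothesis z0_lim : lim_0plus (fun s => z0 s / Rpower s (nu n d)) (INR (d 1%nat * d n) * mu n d).

(** The scale [sigma = s^nu], the degree [K = d_1 d_n], the limit
    [alpha = (K mu)^{d_n}] of the leading coefficient of the inner form, and
    [Sig = 1/d_1 + ... + 1/d_{n-1}], the exponent with [c_i >= s^Sig]. *)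
Definition scale (s : R) : R := Rpower s (nu n d).
Definition Kd : R := INR (d 1%nat * d n).
Definition alpha : R := (Kd * mu n d) ^ d n.
Definition Sig : R := sum_inv (n - 1) d.

Lemma scale_pos s : 0 < scale s.
Proof. apply Rpower_pos. Qed.

Lemma d1_ge1 : (1 <= d 1%nat)%nat.
Proof. apply d_ge1. lia. Qed.

(** [1/d_n < 1] since the [1/d_i] sum to less than 1, so [d_n >= 2]. *)
Lemma dn_ge2 : (2 <= d n)%nat.
Proof.
  pose proof sum_lt1 as Hs. replace n with (S (n - 1)) in Hs at 1 by lia.
  rewrite sum_inv_S in Hs. replace (S (n - 1)) with n in Hs by lia.
  pose proof (sum_inv_nonneg (n - 1) d).
  destruct (Nat.le_gt_cases 2 (d n)) as [|Hlt]; auto. exfalso.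
  assert (E : d n = 1%nat) by (pose proof (d_ge1 n ltac:(lia)); lia).
  rewrite E in Hs. simpl in Hs. rewrite Rinv_1 in Hs. lra.
Qed.

Lemma Dd_ge1 i : In i (seq 1 (n - 1)) -> (1 <= Dd d i)%nat.
Proof. intro Hi. apply in_seq in Hi. unfold Dd. pose proof (d_ge1 i ltac:(lia)). lia. Qed.

Lemma dmax_ge1 : (1 <= dmax n d)%nat.
Proof.
  pose proof d1_ge1. unfold dmax. replace n with (S (n - 1)) by lia. simpl. lia.
Qed.

Lemma Sig_pos : 0 < Sig.
Proof.
  unfold Sig. apply Rlt_le_trans with (sum_inv 1 d); [| apply sum_inv_mono; lia].
  rewrite sum_inv_S. unfold sum_inv at 1; simpl. pose proof (inv_INR_pos _ d1_ge1). lra.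
Qed.

(** [nu - Sig = Sig / (d_n - 1) > 0]: on the inner scale [sigma] every
    radius [c_i >= s^Sig] is relatively huge. *)
Lemma nu_gt_Sig : 0 < nu n d - Sig.
Proof.
  pose proof Sig_pos. pose proof (le_INR _ _ dn_ge2). simpl in H0.
  unfold nu. fold Sig.
  replace (INR (d n) / (INR (d n) - 1) * Sig - Sig) with (Sig / (INR (d n) - 1)) by (field; lra).
  apply Rdiv_lt_0_compat; lra.
Qed.

Lemma nu_pos : 0 < nu n d.
Proof. pose proof nu_gt_Sig. pose proof Sig_pos. lra. Qed.

Lemma mu_pos : 0 < mu n d.
Proof. unfold mu. apply Rmult_lt_0_compat; apply Rpower_pos. Qed.

Lemma K_ge2 : 2 <= Kd.
Proof.
  pose proof (le_INR _ _ dn_ge2). pose proof (le_INR _ _ d1_ge1).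
  unfold Kd. rewrite mult_INR. simpl in *. nra.
Qed.

Lemma Kmu_pos : 0 < Kd * mu n d.
Proof. pose proof K_ge2. pose proof mu_pos. nra. Qed.

Lemma alpha_pos : 0 < alpha.
Proof. apply pow_lt, Kmu_pos. Qed.

Lemma ev_scale_small eps : 0 < eps -> eventually (fun s => scale s < eps).
Proof. intros He. apply Rpower_small; [apply nu_pos | exact He]. Qed.

Lemma ev_cc_small eps : 0 < eps ->
  eventually (fun s => forall i, In i (seq 1 (n - 1)) -> cc n d s i <= eps).
Proof.
  intros He. set (p := / INR (d 1%nat)). assert (Hp : 0 < p) by apply (inv_INR_pos _ d1_ge1).
  set (A := Rpower (INR (dmax n d) ^ 2) p). assert (HA : 0 < A) by apply Rpower_pos.
  assert (Hd0 : 0 < INR (dmax n d) ^ 2) by (apply pow_lt, lt_0_INR; pose proof dmax_ge1; lia).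
  eapply ev_imp; [apply ev_and; [apply (Rpower_small p Hp (eps / A)); apply Rdiv_lt_0_compat; auto|
                                 apply (ev_lt 1); lra]|].
  intros s Hs [H1 H2] i Hi. unfold cc. eapply Rle_trans; [apply caux_upper; lra|].
  change (caux n d s 0) with (Rpower (INR (dmax n d) ^ 2 * s) p). rewrite <- Rpower_mult_distr by auto. fold A.
  apply Rlt_le. apply (Rmult_lt_reg_r (/ A)); [apply Rinv_0_lt_compat; auto|].
  replace (A * Rpower s p * / A) with (Rpower s p) by (field; lra). exact H1.
Qed.

Lemma cc_lower s i : 0 < s <= 1 -> In i (seq 1 (n - 1)) -> Rpower s Sig <= cc n d s i.
Proof.
  intros Hs Hi. apply in_seq in Hi. unfold cc.
  eapply Rle_trans; [| apply caux_lower; [lra| apply dmax_ge1]].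
  apply Rpower_le_exp; [lra|]. unfold Sig. apply sum_inv_mono. lia.
Qed.

Lemma ev_scale_cc eps : 0 < eps ->
  eventually (fun s => forall i, In i (seq 1 (n - 1)) -> scale s <= eps * cc n d s i).
Proof.
  intros He.
  eapply ev_imp; [apply ev_and; [apply (Rpower_small _ nu_gt_Sig eps He)| apply (ev_lt 1); lra]|].
  intros s Hs [H1 H2] i Hi. pose proof (cc_lower s i ltac:(lra) Hi) as Hc.
  unfold scale. rewrite <- Rpower_div in H1. pose proof (Rpower_pos s Sig).
  assert (Rpower s (nu n d) < eps * Rpower s Sig).
  { apply (Rmult_lt_reg_r (/ Rpower s Sig)); [apply Rinv_0_lt_compat; auto|].
    replace (eps * Rpower s Sig * / Rpower s Sig) with eps by (field; lra). exact H1. }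
  nra.
Qed.

Lemma ev_Fin M eta : 0 < M -> 0 < eta ->
  eventually (fun s => forall w, Cabs w <= M * scale s -> Cabs (Csub (Fin n d s w) Cone) <= eta).
Proof.
  intros HM He. destruct (prod_near1 (seq 1 (n - 1)) eta He) as [t [Ht Hprod]].
  eapply ev_imp; [apply (ev_scale_cc (t / M)); apply Rdiv_lt_0_compat; lra|].
  intros s Hs Hsc w Hw. apply Hprod. intros i Hi.
  apply gin_est; [apply Dd_ge1; auto| lra|].
  specialize (Hsc i Hi). eapply Rle_trans; [exact Hw|].
  replace (t * cc n d s i) with (M * (t / M * cc n d s i)) by (field; lra).
  apply Rmult_le_compat_l; lra.
Qed.

Lemma ev_Eout B eta : 0 < B -> 0 < eta ->
  eventually (fun s => forall z, Cabs (Cinv z) <= B -> Cabs (Csub (Eout n d s z) Cone) <= eta).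
Proof.
  intros HB He. destruct (prod_near1 (seq 1 (n - 1)) eta He) as [t [Ht Hprod]].
  eapply ev_imp; [apply (ev_cc_small (t / B)); apply Rdiv_lt_0_compat; lra|].
  intros s Hs Hsc z Hz. apply Hprod. intros i Hi.
  apply gout_est with (B := B); [apply Dd_ge1; auto| lra| auto|].
  specialize (Hsc i Hi). replace t with (t / B * B) by (field; lra). apply Rmult_le_compat_r; lra.
Qed.

Lemma ev_pos_of_ratio (f : R -> R) l : 0 < l ->
  (forall eta, 0 < eta -> eventually (fun s => Rabs (f s / scale s - l) < eta)) ->
  eventually (fun s => 0 < f s).
Proof.
  intros Hl Hf. eapply ev_imp; [apply (Hf (l/2)); lra|]. intros s Hs H.
  apply Rabs_def2 in H. pose proof (scale_pos s).
  assert (0 < f s / scale s) by lra.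
  replace (f s) with (f s / scale s * scale s) by (field; lra). nra.
Qed.

Lemma ev_small_of_ratio (f : R -> R) l :
  (forall eta, 0 < eta -> eventually (fun s => Rabs (f s / scale s - l) < eta)) ->
  forall eps, 0 < eps -> eventually (fun s => Rabs (f s) < eps).
Proof.
  intros Hf eps He.
  assert (HL : 0 < Rabs l + 1) by (pose proof (Rabs_pos l); lra).
  eapply ev_imp; [apply ev_and; [apply (Hf 1); lra| apply (ev_scale_small (eps / (Rabs l + 1))); apply Rdiv_lt_0_compat; lra]|].
  intros s Hs [H1 H2]. pose proof (scale_pos s).
  replace (f s) with (f s / scale s * scale s) by (field; lra).
  rewrite Rabs_mult, (Rabs_pos_eq (scale s)) by lra.
  assert (Rabs (f s / scale s) <= Rabs l + 1).
  { pose proof (Rabs_triang (f s / scale s - l) l) as Ht.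
    replace (f s / scale s - l + l) with (f s / scale s) in Ht by ring. lra. }
  assert (scale s * (Rabs l + 1) < eps).
  { apply (Rmult_lt_reg_r (/ (Rabs l + 1))); [apply Rinv_0_lt_compat; lra|].
    replace (scale s * (Rabs l + 1) * / (Rabs l + 1)) with (scale s) by (field; lra). exact H2. }
  pose proof (Rabs_pos (f s / scale s)). nra.
Qed.

Lemma ev_S eta : 0 < eta -> eventually (fun s => Rabs (Sn s / scale s - mu n d) < eta).
Proof. apply lim_ev, Sn_lim. Qed.
Lemma ev_T eta : 0 < eta -> eventually (fun s => Rabs (Tn s / scale s - (Kd - 1) * mu n d) < eta).
Proof. apply lim_ev, Tn_lim. Qed.
Lemma ev_z eta : 0 < eta -> eventually (fun s => Rabs (z0 s / scale s - Kd * mu n d) < eta).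
Proof. apply lim_ev, z0_lim. Qed.

Lemma ev_Sn_pos : eventually (fun s => 0 < Sn s).
Proof. apply (ev_pos_of_ratio Sn _ mu_pos ev_S). Qed.
Lemma ev_Tn_pos : eventually (fun s => 0 < Tn s).
Proof.
  apply (ev_pos_of_ratio Tn ((Kd - 1) * mu n d)); [| exact ev_T].
  pose proof K_ge2; pose proof mu_pos; nra.
Qed.
Lemma ev_z0_pos : eventually (fun s => 0 < z0 s).
Proof. apply (ev_pos_of_ratio z0 _ Kmu_pos ev_z). Qed.
Lemma ev_Tn_small eps : 0 < eps -> eventually (fun s => Rabs (Tn s) < eps).
Proof. apply (ev_small_of_ratio Tn _ ev_T). Qed.

(** Inner region: [R_n(sigma u) = Pin(u) / u^{d_n}] with
    [Pin(u) = lead Fin(sigma u) + T_n u^{d_n}]. *)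
Definition lead (s : R) : Cplx := Cmul (RtoC (Sn s / scale s ^ d n)) (Ccst n d s).
Definition Pin (s : R) (u : Cplx) : Cplx :=
  Cadd (Cmul (lead s) (Fin n d s (Cmul (RtoC (scale s)) u))) (Cmul (RtoC (Tn s)) (Cpow u (d n))).

(** Outer region: [R_n(z) = sigma Vout(z)], with limit [Vlim (d_1) (1/z)],
    where [Vlim m W = mu (W^m + K - 1)]. *)
Definition Vout (s : R) (z : Cplx) : Cplx :=
  Cadd (Cmul (Cmul (RtoC (Sn s / scale s)) (Cpow (Cinv z) (d 1%nat))) (Eout n d s z)) (RtoC (Tn s / scale s)).
Definition Vlim (m : nat) (W : Cplx) : Cplx := Cmul (RtoC (mu n d)) (Cadd (Cpow W m) (RtoC (Kd - 1))).

Lemma inner_formula s u : u <> Czero ->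
  Some (Rn n d s (Sn s) (Tn s) (Cmul (RtoC (scale s)) u)) = hc (Pin s u) (Cpow u (d n)).
Proof.
  intros Hu. unfold hc. destruct (Ceq_dec (Cpow u (d n))) as [E|E]; [exfalso; apply (Cpow_neq0 u (d n) Hu E)|].
  f_equal. rewrite Rn_inner. unfold Pin, lead.
  pose proof (scale_pos s). assert (Hs : RtoC (scale s) <> Czero) by (apply RtoC_neq0; lra).
  unfold Rdiv. rewrite RtoC_mul, RtoC_inv by (apply pow_nonzero; lra). rewrite <- Cpow_RtoC, Cpow_mulb.
  field. repeat split; try apply Cpow_neq0; auto.
Qed.

Lemma outer_formula s z : z <> Czero ->
  Rn n d s (Sn s) (Tn s) z = Cmul (RtoC (scale s)) (Vout s z).
Proof.
  intros Hz. rewrite Rn_outer by auto. unfold Vout.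
  pose proof (scale_pos s). assert (Hs : RtoC (scale s) <> Czero) by (apply RtoC_neq0; lra).
  unfold Rdiv. rewrite !RtoC_mul, !RtoC_inv by lra. field. auto.
Qed.

(** The fixed-point equation [R_n(z_0) = 1] determines the leading coefficient:
    [lead Fin(z_0) = (1 - T_n) (z_0/sigma)^{d_n}]. *)
Lemma lead_fixed : eventually (fun s =>
  Cmul (lead s) (Fin n d s (RtoC (z0 s))) = RtoC ((1 - Tn s) * (z0 s / scale s) ^ d n)).
Proof.
  eapply ev_imp; [apply (ev_and _ _ z0_fixed ev_z0_pos)|].
  intros s Hs [E Hz]. rewrite Rn_inner in E. pose proof (scale_pos s).
  assert (HZ : Cpow (RtoC (z0 s)) (d n) <> Czero) by (apply Cpow_neq0, RtoC_neq0; lra).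
  assert (HT : RtoC (Tn s) = Csub Cone (Cmul (Cmul (RtoC (Sn s)) (Cinv (Cpow (RtoC (z0 s)) (d n))))
             (Cmul (Ccst n d s) (Fin n d s (RtoC (z0 s)))))) by (rewrite <- RtoC_1, <- E; ring).
  unfold lead.
  assert (Hs' : RtoC (scale s) <> Czero) by (apply RtoC_neq0; lra).
  assert (Hp : scale s ^ d n <> 0) by (apply pow_nonzero; lra).
  replace (RtoC ((1 - Tn s) * (z0 s / scale s) ^ d n)) with
    (Cmul (Csub Cone (RtoC (Tn s))) (Cmul (Cpow (RtoC (z0 s)) (d n)) (Cinv (Cpow (RtoC (scale s)) (d n))))).
  2:{ rewrite !Cpow_RtoC, <- RtoC_inv by auto. rewrite <- RtoC_1, <- RtoC_sub, <- !RtoC_mul. f_equal.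
      unfold Rdiv. rewrite Rpow_mult_distr, pow_inv. ring. }
  replace (RtoC (Sn s / scale s ^ d n)) with (Cmul (RtoC (Sn s)) (Cinv (Cpow (RtoC (scale s)) (d n)))).
  2:{ rewrite Cpow_RtoC, <- RtoC_inv by auto. rewrite <- RtoC_mul. reflexivity. }
  rewrite HT. field. split; auto. apply Cpow_neq0; auto.
Qed.

(** Hence [lead -> alpha]: [Fin(z_0) -> 1], [T_n -> 0] and [z_0/sigma -> K mu]. *)
Lemma ev_lead eta : 0 < eta -> eventually (fun s => Cabs (Csub (lead s) (RtoC alpha)) <= eta).
Proof.
  intros He. pose proof alpha_pos as Ha. pose proof Kmu_pos as Hy.
  set (y := Kd * mu n d) in *. set (B := y + 1). assert (HB : 1 <= B) by (unfold B; lra).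
  set (m := d n). assert (HBm : 0 < B ^ m) by (apply pow_lt; lra).
  assert (Hm : 0 < INR m + 1) by (pose proof (pos_INR m); lra).
  set (rho := Rmin 1 (eta / 8 / ((INR m + 1) * B ^ m))).
  assert (Hr1 : rho <= 1) by apply Rmin_l.
  assert (Hr2 : rho <= eta / 8 / ((INR m + 1) * B ^ m)) by apply Rmin_r.
  assert (Hrho : 0 < rho) by (apply Rmin_glb_lt; [lra| apply Rdiv_lt_0_compat; [lra| apply Rmult_lt_0_compat; auto]]).
  set (tau := eta / 8 / B ^ m). assert (Htau : 0 < tau) by (apply Rdiv_lt_0_compat; lra).
  set (e := Rmin (1/2) (eta / 4 / alpha)).
  assert (He1 : e <= 1/2) by apply Rmin_l. assert (He2 : e <= eta / 4 / alpha) by apply Rmin_r.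
  assert (Hee : 0 < e) by (apply Rmin_glb_lt; [lra| apply Rdiv_lt_0_compat; lra]).
  eapply ev_imp.
  { apply ev_and; [apply lead_fixed|]. apply ev_and; [apply (ev_z rho Hrho)|].
    apply ev_and; [apply (ev_Tn_small tau Htau)|]. apply ev_and; [apply (ev_Fin B e); lra|].
    apply ev_z0_pos. }
  intros s Hs [Hfix [Hz [HT [HF Hzp]]]]. pose proof (scale_pos s). fold y in Hz.
  assert (Hq : Rabs ((1 - Tn s) * (z0 s / scale s) ^ m - y ^ m) <= eta / 4).
  { eapply Rle_trans; [apply (q_close _ _ _ m B rho tau); try lra; rewrite Rabs_pos_eq; unfold B; lra|].
    assert (INR m * B ^ m * rho <= eta / 8).
    { apply Rle_trans with ((INR m + 1) * B ^ m * rho); [apply Rmult_le_compat_r; nra|].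
      apply (Rmult_le_reg_r (/ ((INR m + 1) * B ^ m))); [apply Rinv_0_lt_compat, Rmult_lt_0_compat; lra|].
      replace ((INR m + 1) * B ^ m * rho * / ((INR m + 1) * B ^ m)) with rho by (field; lra). exact Hr2. }
    assert (tau * B ^ m = eta / 8) by (unfold tau; field; lra). lra. }
  assert (Hz0 : Cabs (RtoC (z0 s)) <= B * scale s).
  { rewrite Cabs_RtoC, Rabs_pos_eq by lra. apply Rabs_def2 in Hz.
    replace (z0 s) with (z0 s / scale s * scale s) by (field; lra). apply Rmult_le_compat_r; unfold B; lra. }
  pose proof (div_close _ _ _ (RtoC alpha) e (eta / 4) (HF _ Hz0) He1 Hfix) as Hd.
  rewrite <- RtoC_sub, Cabs_RtoC, Cabs_RtoC, (Rabs_pos_eq alpha) in Hd by lra. specialize (Hd Hq).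
  assert (alpha * e <= eta / 4).
  { apply (Rmult_le_reg_r (/ alpha)); [apply Rinv_0_lt_compat; lra|].
    replace (alpha * e * / alpha) with e by (field; lra). exact He2. }
  lra.
Qed.

Lemma ev_Pin L eta : 0 < L -> 0 < eta ->
  eventually (fun s => forall u, Cabs u <= L -> Cabs (Csub (Pin s u) (RtoC alpha)) <= eta).
Proof.
  intros HL He. pose proof alpha_pos as Ha.
  set (LL := (L + 1) ^ d n). assert (HLL : 0 < LL) by (apply pow_lt; lra).
  eapply ev_imp.
  { apply ev_and; [apply (ev_lead (Rmin 1 (eta / 3))); apply Rmin_glb_lt; lra|].
    apply ev_and; [apply (ev_Fin L (eta / 3 / (alpha + 1))); [lra| apply Rdiv_lt_0_compat; lra]|].
    apply (ev_Tn_small (eta / 3 / LL)); apply Rdiv_lt_0_compat; lra. }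
  intros s Hs [Hal [HF HT]] u Hu.
  assert (Hal1 : Cabs (Csub (lead s) (RtoC alpha)) <= 1) by (eapply Rle_trans; [exact Hal| apply Rmin_l]).
  assert (Hal2 : Cabs (Csub (lead s) (RtoC alpha)) <= eta / 3) by (eapply Rle_trans; [exact Hal| apply Rmin_r]).
  assert (Habs : Cabs (lead s) <= alpha + 1)
    by (pose proof (Cabs_near _ _ _ Hal1); rewrite Cabs_RtoC, Rabs_pos_eq in H by lra; lra).
  pose proof (scale_pos s).
  assert (Hw : Cabs (Cmul (RtoC (scale s)) u) <= L * scale s)
    by (rewrite Cabs_mul, Cabs_RtoC, Rabs_pos_eq by lra; nra).
  specialize (HF _ Hw). set (F := Fin n d s (Cmul (RtoC (scale s)) u)) in *.
  unfold Pin. fold F.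
  replace (Csub (Cadd (Cmul (lead s) F) (Cmul (RtoC (Tn s)) (Cpow u (d n)))) (RtoC alpha))
    with (Cadd (Cadd (Cmul (lead s) (Csub F Cone)) (Csub (lead s) (RtoC alpha)))
               (Cmul (RtoC (Tn s)) (Cpow u (d n)))) by ring.
  eapply Rle_trans; [apply Cabs_triangle|]. eapply Rle_trans; [apply Rplus_le_compat_r, Cabs_triangle|].
  rewrite !Cabs_mul, Cabs_RtoC, Cabs_pow.
  assert (Hu1 : Cabs u ^ d n <= LL) by (apply pow_incr; pose proof (Cabs_nonneg u); lra).
  assert (Rabs (Tn s) * Cabs u ^ d n <= eta / 3).
  { apply Rle_trans with (eta / 3 / LL * LL); [apply Rmult_le_compat; try lra; [apply Rabs_pos| apply pow_le, Cabs_nonneg]|].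
    right; field; lra. }
  assert (Cabs (lead s) * Cabs (Csub F Cone) <= eta / 3).
  { apply Rle_trans with ((alpha + 1) * (eta / 3 / (alpha + 1))); [apply Rmult_le_compat; try lra; apply Cabs_nonneg|].
    right; field; lra. }
  lra.
Qed.

Lemma Vlim_0 : Vlim (d 1%nat) Czero = RtoC (mu n d * (Kd - 1)).
Proof. unfold Vlim. rewrite Cpow_0 by apply d1_ge1. rewrite RtoC_mul. ring. Qed.

Lemma ev_Vout B eta : 0 < B -> 0 < eta ->
  eventually (fun s =>
    (forall z, z <> Czero -> Cabs (Cinv z) <= B -> Cabs (Csub (Vout s z) (Vlim (d 1%nat) (Cinv z))) <= eta) /\
    Cabs (Csub (RtoC (Tn s / scale s)) (Vlim (d 1%nat) Czero)) <= eta).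
Proof.
  intros HB He. pose proof mu_pos as Hmu.
  set (BB := (B + 1) ^ d 1%nat). assert (HBB : 0 < BB) by (apply pow_lt; lra).
  eapply ev_imp.
  { apply ev_and; [apply (ev_S (eta / 6 / BB)); apply Rdiv_lt_0_compat; lra|].
    apply ev_and; [apply (ev_Eout B (Rmin 1 (eta / 3 / (mu n d * BB))));
                   [lra| apply Rmin_glb_lt; [lra| apply Rdiv_lt_0_compat; nra]]|].
    apply (ev_T (eta / 3)); lra. }
  intros s Hs [HS [HE HT]]. split.
  - intros z Hz HW. specialize (HE z HW).
    assert (HE1 : Cabs (Csub (Eout n d s z) Cone) <= 1) by (eapply Rle_trans; [exact HE| apply Rmin_l]).
    assert (HE2 : Cabs (Csub (Eout n d s z) Cone) <= eta / 3 / (mu n d * BB))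
      by (eapply Rle_trans; [exact HE| apply Rmin_r]).
    assert (HEa : Cabs (Eout n d s z) <= 2) by (pose proof (Cabs_near _ _ _ HE1); rewrite Cabs_1 in H; lra).
    set (W := Cinv z) in *. set (E := Eout n d s z) in *.
    unfold Vout, Vlim. fold W. fold E.
    replace (Csub (Cadd (Cmul (Cmul (RtoC (Sn s / scale s)) (Cpow W (d 1%nat))) E) (RtoC (Tn s / scale s)))
              (Cmul (RtoC (mu n d)) (Cadd (Cpow W (d 1%nat)) (RtoC (Kd - 1)))))
      with (Cadd (Cadd (Cmul (Cmul (RtoC (Sn s / scale s - mu n d)) (Cpow W (d 1%nat))) E)
                       (Cmul (Cmul (RtoC (mu n d)) (Cpow W (d 1%nat))) (Csub E Cone)))
                 (RtoC (Tn s / scale s - (Kd - 1) * mu n d)))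
      by (rewrite !RtoC_sub, !RtoC_mul, RtoC_sub, RtoC_1; ring).
    eapply Rle_trans; [apply Cabs_triangle|]. eapply Rle_trans; [apply Rplus_le_compat_r, Cabs_triangle|].
    rewrite !Cabs_mul, !Cabs_RtoC, Cabs_pow, (Rabs_pos_eq (mu n d)) by lra.
    assert (HWp : Cabs W ^ d 1%nat <= BB) by (apply pow_incr; pose proof (Cabs_nonneg W); lra).
    pose proof (pow_le (Cabs W) (d 1%nat) (Cabs_nonneg W)).
    pose proof (Rabs_pos (Sn s / scale s - mu n d)). pose proof (Cabs_nonneg E).
    assert (Rabs (Sn s / scale s - mu n d) * Cabs W ^ d 1%nat * Cabs E <= eta / 3).
    { apply Rle_trans with (eta / 6 / BB * BB * 2); [apply Rmult_le_compat; try lra; [nra| apply Rmult_le_compat; lra]|].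
      right; field; lra. }
    assert (mu n d * Cabs W ^ d 1%nat * Cabs (Csub E Cone) <= eta / 3).
    { apply Rle_trans with (mu n d * BB * (eta / 3 / (mu n d * BB))); [apply Rmult_le_compat; try nra; apply Cabs_nonneg|].
      right; field; lra. }
    lra.
  - rewrite Vlim_0, <- RtoC_sub, Cabs_RtoC.
    replace (Tn s / scale s - mu n d * (Kd - 1)) with (Tn s / scale s - (Kd - 1) * mu n d) by ring. lra.
Qed.

Definition radL (s : R) : list (R -> R) := map (fun i => fun r => r - cc n d s i) (seq 1 (n - 1)).

Lemma radL_incr s : incr (radL s).
Proof. intros g Hg x y Hx Hxy. unfold radL in Hg. apply in_map_iff in Hg. destruct Hg as [i [<- _]]. lra. Qed.

Lemma dom_of_rad s z : z <> Czero ->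
  (forall i, In i (seq 1 (n - 1)) -> Cabs z <> cc n d s i) -> Rn_dom n d s z.
Proof.
  intros Hz Hr. split; auto. intros i Hi E.
  assert (Hin : In i (seq 1 (n - 1))) by (apply in_seq; lia).
  apply (Hr i Hin). unfold fbase in E. pose proof (cc_pos n d s i).
  assert (E2 : Cpow z (Dd d i) = RtoC (cc n d s i ^ Dd d i)).
  { replace (Cpow z (Dd d i)) with (Cadd (Csub (Cpow z (Dd d i)) (RtoC (cc n d s i ^ Dd d i))) (RtoC (cc n d s i ^ Dd d i))) by ring.
    rewrite E; ring. }
  apply (f_equal Cabs) in E2. rewrite Cabs_pow, Cabs_RtoC, Rabs_pos_eq in E2 by (apply pow_le; lra).
  apply (pow_inj _ _ (Dd d i)); auto; [apply Cabs_nonneg| lra| apply Dd_ge1; auto].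
Qed.

Lemma dom_of_goodrad s z : goodrad (radL s) z -> Rn_dom n d s z.
Proof.
  intros [Hz Hg]. apply dom_of_rad; auto. intros i Hi E.
  apply (Hg (fun r => r - cc n d s i)); [unfold radL; apply in_map_iff; exists i; auto| lra].
Qed.

Section Extension.

Variable Rhat : R -> Chat -> Chat.
Hypothesis Rhat_ext : forall s, 0 < s -> sphere_ext (Rn_dom n d s) (Rn n d s (Sn s) (Tn s)) (Rhat s).

Definition Nouter (s : R) (b : Chat) : Cplx :=
  match b with Some z => Rn n d s (Sn s) (Tn s) z | None => RtoC (Tn s) end.

Lemma vcont_Nouter s : 0 < s <= 1 -> vcont (Nouter s) None.
Proof.
  intros Hs eps He.
  destruct (prod_near1 (seq 1 (n - 1)) 1 ltac:(lra)) as [t [Ht Hprod]].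
  pose proof (caux_pos n d s 0) as Hc1.
  set (SS := 2 * Rabs (Sn s) + 1). assert (HSS : 0 < SS) by (unfold SS; pose proof (Rabs_pos (Sn s)); lra).
  set (dl := Rmin 1 (Rmin (t / caux n d s 0) (eps / SS))).
  assert (Hd1 : dl <= 1) by apply Rmin_l.
  assert (Hd2 : dl <= t / caux n d s 0) by (eapply Rle_trans; [apply Rmin_r| apply Rmin_l]).
  assert (Hd3 : dl <= eps / SS) by (eapply Rle_trans; [apply Rmin_r| apply Rmin_r]).
  assert (Hdl : 0 < dl)
    by (apply Rmin_glb_lt; [lra| apply Rmin_glb_lt; apply Rdiv_lt_0_compat; lra]).
  exists dl. split; auto. intros b Hb. destruct b as [z|];
    [| simpl; replace (Csub (RtoC (Tn s)) (RtoC (Tn s))) with Czero by ring; rewrite Cabs_0; lra].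
  destruct (near_infty_inv z dl ltac:(lra) Hb) as [Hz0 HW].
  simpl Nouter. rewrite Rn_outer by auto.
  replace (Csub (Cadd (Cmul (Cmul (RtoC (Sn s)) (Cpow (Cinv z) (d 1%nat))) (Eout n d s z)) (RtoC (Tn s))) (RtoC (Tn s)))
    with (Cmul (Cmul (RtoC (Sn s)) (Cpow (Cinv z) (d 1%nat))) (Eout n d s z)) by ring.
  rewrite !Cabs_mul, Cabs_RtoC, Cabs_pow.
  assert (HE : Cabs (Csub (Eout n d s z) Cone) <= 1).
  { apply Hprod. intros i Hi. apply gout_est with (B := dl); [apply Dd_ge1; auto| lra| lra|].
    pose proof (caux_upper n d s (i - 1) Hs). pose proof (cc_pos n d s i). unfold cc in *.
    apply Rle_trans with (caux n d s 0 * (t / caux n d s 0)); [apply Rmult_le_compat; lra| right; field; lra]. }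
  assert (HEa : Cabs (Eout n d s z) <= 2) by (pose proof (Cabs_near _ _ _ HE); rewrite Cabs_1 in H; lra).
  assert (HWp : Cabs (Cinv z) ^ d 1%nat <= dl)
    by (eapply Rle_trans; [apply pow_le_self; [split; [apply Cabs_nonneg| lra]| apply d1_ge1]| lra]).
  pose proof (Rabs_pos (Sn s)). pose proof (Cabs_nonneg (Eout n d s z)).
  pose proof (pow_le _ (d 1%nat) (Cabs_nonneg (Cinv z))).
  assert (HWE : Cabs (Cinv z) ^ d 1%nat * Cabs (Eout n d s z) <= dl * 2) by (apply Rmult_le_compat; lra).
  apply Rle_lt_trans with (2 * Rabs (Sn s) * dl); [rewrite Rmult_assoc; nra|].
  assert (Hq : 2 * Rabs (Sn s) * (eps / SS) < eps).
  { replace (2 * Rabs (Sn s) * (eps / SS)) with (eps * (2 * Rabs (Sn s) / SS)) by (field; lra).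
    assert (2 * Rabs (Sn s) / SS < 1)
      by (apply (Rmult_lt_reg_r SS); [lra|]; unfold Rdiv; rewrite Rmult_assoc, Rinv_l by lra; unfold SS; lra).
    nra. }
  pose proof (Rmult_le_compat_l (2 * Rabs (Sn s)) _ _ ltac:(lra) Hd3). lra.
Qed.

Lemma Rhat_infty : eventually (fun s => Rhat s None = Some (RtoC (Tn s))).
Proof.
  eapply ev_imp; [apply ev_and; [apply (ev_lt 1); lra| apply ev_Tn_pos]|].
  intros s Hs [Hs1 HT]. destruct (Rhat_ext s Hs) as [Hc Hag].
  rewrite <- hc_one. change (RtoC (Tn s)) with (Nouter s None).
  apply (ext_hc (Rhat s) (Nouter s) (fun _ => Cone) None).
  - intros eps He. apply Hc; auto.
  - apply vcont_Nouter; lra.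
  - intros eps He. exists 1. split; [lra|]. intros. replace (Csub Cone Cone) with Czero by ring. rewrite Cabs_0. lra.
  - simpl. apply RtoC_neq0. lra.
  - intros dl Hdl. destruct (dense_goodrad (radL s) None dl (radL_incr s) Hdl) as [z [Hz Hg]].
    exists (Some z). split; auto. rewrite hc_one. simpl Nouter. apply Hag. apply dom_of_goodrad; auto.
Qed.

(** Near [0], [R_n = Ninner / z^{d_n}]. *)
Definition Ninner (s : R) (b : Chat) : Cplx :=
  match b with
  | Some z => Cadd (Cmul (RtoC (Sn s)) (Cmul (Ccst n d s) (Fin n d s z))) (Cmul (RtoC (Tn s)) (Cpow z (d n)))
  | None => Cone
  end.
Definition Dinner (b : Chat) : Cplx := match b with Some z => Cpow z (d n) | None => Cone end.

Lemma Ninner_0 s : Ninner s (Some Czero) = Cmul (RtoC (Sn s)) (Ccst n d s).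
Proof.
  simpl. rewrite Fin_0 by apply Dd_ge1. rewrite Cpow_0 by (pose proof dn_ge2; lia). ring.
Qed.

Lemma vcont_Dinner : vcont Dinner (Some Czero).
Proof.
  pose proof dn_ge2. intros eps He. exists (Rmin (1/2) (eps / 2)). split; [apply Rmin_glb_lt; lra|].
  intros b Hb. pose proof (Rmin_l (1/2) (eps/2)); pose proof (Rmin_r (1/2) (eps/2)).
  destruct (near0_finite b (Rmin (1/2) (eps/2)) ltac:(lra) Hb) as [z [-> Hz]].
  simpl Dinner. rewrite Cpow_0 by lia. replace (Csub (Cpow z (d n)) Czero) with (Cpow z (d n)) by ring.
  rewrite Cabs_pow. assert (Cabs z ^ d n <= Cabs z) by (apply pow_le_self; [split; [apply Cabs_nonneg| lra]| lia]).
  lra.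
Qed.

Lemma vcont_Ninner s : 0 < s <= 1 -> vcont (Ninner s) (Some Czero).
Proof.
  intros Hs eps He. pose proof dn_ge2.
  set (SC := Cabs (Cmul (RtoC (Sn s)) (Ccst n d s))). assert (HSC : 0 <= SC) by apply Cabs_nonneg.
  destruct (prod_near1 (seq 1 (n - 1)) (eps / (2 * (SC + 1)))) as [t [Ht Hprod]];
    [apply Rdiv_lt_0_compat; lra|].
  set (cm := Rpower s Sig). assert (Hcm : 0 < cm) by apply Rpower_pos.
  set (TT := Rabs (Tn s) + 1). assert (HTT : 0 < TT) by (unfold TT; pose proof (Rabs_pos (Tn s)); lra).
  set (dl := Rmin (1/2) (Rmin (t * cm) (eps / (2 * TT)))).
  assert (Hd1 : dl <= 1/2) by apply Rmin_l.
  assert (Hd2 : dl <= t * cm) by (eapply Rle_trans; [apply Rmin_r| apply Rmin_l]).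
  assert (Hd3 : dl <= eps / (2 * TT)) by (eapply Rle_trans; [apply Rmin_r| apply Rmin_r]).
  assert (Hdl : 0 < dl) by (apply Rmin_glb_lt; [lra| apply Rmin_glb_lt; [nra| apply Rdiv_lt_0_compat; lra]]).
  exists dl. split; auto. intros b Hb.
  destruct (near0_finite b dl ltac:(lra) Hb) as [z [-> Hz]].
  rewrite Ninner_0. simpl Ninner.
  replace (Csub (Cadd (Cmul (RtoC (Sn s)) (Cmul (Ccst n d s) (Fin n d s z))) (Cmul (RtoC (Tn s)) (Cpow z (d n))))
                (Cmul (RtoC (Sn s)) (Ccst n d s)))
    with (Cadd (Cmul (Cmul (RtoC (Sn s)) (Ccst n d s)) (Csub (Fin n d s z) Cone)) (Cmul (RtoC (Tn s)) (Cpow z (d n)))) by ring.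
  eapply Rle_lt_trans; [apply Cabs_triangle|].
  rewrite (Cabs_mul (Cmul (RtoC (Sn s)) (Ccst n d s))), (Cabs_mul (RtoC (Tn s))), Cabs_RtoC, Cabs_pow. fold SC.
  assert (HF : Cabs (Csub (Fin n d s z) Cone) <= eps / (2 * (SC + 1))).
  { apply Hprod. intros i Hi. apply gin_est; [apply Dd_ge1; auto| lra|].
    pose proof (cc_lower s i ltac:(lra) Hi). fold cm in H0. nra. }
  assert (HFe : SC * Cabs (Csub (Fin n d s z) Cone) <= eps / 2).
  { apply Rle_trans with ((SC + 1) * (eps / (2 * (SC + 1)))); [apply Rmult_le_compat; try lra; apply Cabs_nonneg|].
    right; field; lra. }
  assert (Hzp : Cabs z ^ d n <= Cabs z) by (apply pow_le_self; [split; [apply Cabs_nonneg| lra]| lia]).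
  assert (HTe : Rabs (Tn s) * Cabs z ^ d n < eps / 2).
  { pose proof (Rabs_pos (Tn s)). pose proof (pow_le _ (d n) (Cabs_nonneg z)).
    assert (He2 : 0 < eps / (2 * TT)) by (apply Rdiv_lt_0_compat; lra).
    apply Rle_lt_trans with (Rabs (Tn s) * (eps / (2 * TT))); [apply Rmult_le_compat_l; lra|].
    apply Rlt_le_trans with (TT * (eps / (2 * TT))); [apply Rmult_lt_compat_r; [exact He2| unfold TT; lra]|].
    right; field; lra. }
  lra.
Qed.

Lemma Rhat_zero : eventually (fun s => Rhat s (Some Czero) = None).
Proof.
  pose proof dn_ge2 as Hdn.
  eapply ev_imp; [apply ev_and; [apply (ev_lt 1); lra| apply ev_Sn_pos]|].
  intros s Hs [Hs1 HS]. destruct (Rhat_ext s Hs) as [Hc Hag].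
  transitivity (hc (Ninner s (Some Czero)) (Dinner (Some Czero))).
  2:{ simpl Dinner. rewrite Cpow_0 by lia. apply hc_zero. }
  apply (ext_hc (Rhat s) (Ninner s) Dinner (Some Czero)).
  - intros eps He. apply Hc; auto.
  - apply vcont_Ninner; lra.
  - apply vcont_Dinner.
  - rewrite Ninner_0. apply Cmul_neq0; [apply RtoC_neq0; lra| apply Ccst_neq0].
  - intros dl Hdl. destruct (dense_goodrad (radL s) (Some Czero) dl (radL_incr s) Hdl) as [z [Hz Hg]].
    exists (Some z). split; auto.
    rewrite Hag by (apply dom_of_goodrad; auto). destruct Hg as [Hz0 _].
    unfold hc. simpl Dinner. destruct (Ceq_dec (Cpow z (d n))) as [E|E]; [exfalso; apply (Cpow_neq0 z (d n) Hz0 E)|].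
    f_equal. rewrite Rn_inner. simpl Ninner. field. auto.
Qed.

Lemma inner_Rhat L eta : 0 < L -> 0 < eta ->
  eventually (fun s => forall u, Cabs u <= L -> exists P,
    Rhat s (Some (Cmul (RtoC (scale s)) u)) = hc P (Cpow u (d n)) /\ Cabs (Csub P (RtoC alpha)) <= eta).
Proof.
  intros HL He. pose proof dn_ge2 as Hdn.
  eapply ev_imp.
  { apply ev_and; [apply Rhat_zero|]. apply ev_and; [apply (ev_Pin L eta HL He)|].
    apply (ev_scale_cc (/ (2 * L))). apply Rinv_0_lt_compat; lra. }
  intros s Hs [HZ [HP Hsc]] u Hu.
  destruct (Ceq_dec u) as [->|Hu0].
  - exists (RtoC alpha). split.
    + replace (Cmul (RtoC (scale s)) Czero) with Czero by ring. rewrite HZ, Cpow_0 by lia. symmetry; apply hc_zero.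
    + replace (Csub (RtoC alpha) (RtoC alpha)) with Czero by ring. rewrite Cabs_0. lra.
  - exists (Pin s u). split; [| apply HP; auto].
    pose proof (scale_pos s). destruct (Rhat_ext s Hs) as [_ Hag].
    rewrite Hag; [apply inner_formula; auto|].
    apply dom_of_rad; [apply Cmul_neq0; auto; apply RtoC_neq0; lra|].
    intros i Hi E. specialize (Hsc i Hi). pose proof (cc_pos n d s i).
    rewrite Cabs_mul, Cabs_RtoC, Rabs_pos_eq in E by lra.
    assert (scale s * Cabs u <= scale s * L) by (apply Rmult_le_compat_l; lra).
    assert (scale s * L <= cc n d s i / 2).
    { apply Rle_trans with (/ (2 * L) * cc n d s i * L); [apply Rmult_le_compat_r; lra| right; field; lra]. }
    lra.
Qed.

Lemma outer_Rhat B eta : 0 < B -> 0 < eta ->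
  eventually (fun s => forall y W, Wrel y W -> Cabs W <= B -> exists v,
    Rhat s y = Some (Cmul (RtoC (scale s)) v) /\ Cabs (Csub v (Vlim (d 1%nat) W)) <= eta).
Proof.
  intros HB He.
  eapply ev_imp.
  { apply ev_and; [apply Rhat_infty|]. apply ev_and; [apply (ev_Vout B eta HB He)|].
    apply (ev_cc_small (/ (2 * B))). apply Rinv_0_lt_compat; lra. }
  intros s Hs [HN [[HV HV0] Hcc]] y W HW HWB. pose proof (scale_pos s).
  destruct HW as [[-> ->]|[z [-> Hz]]].
  - exists (RtoC (Tn s / scale s)). split; auto.
    rewrite HN. f_equal. rewrite <- RtoC_mul. f_equal. field. lra.
  - assert (Hz0 : z <> Czero) by (intro E; subst; apply Cone_neq0; rewrite <- Hz; ring).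
    assert (HWz : W = Cinv z) by (transitivity (Cmul (Cinv z) (Cmul z W)); [field; auto| rewrite Hz; ring]).
    subst W. exists (Vout s z). split; [| apply HV; auto].
    destruct (Rhat_ext s Hs) as [_ Hag]. rewrite Hag; [f_equal; apply outer_formula; auto|].
    apply dom_of_rad; auto.
    intros i Hi E. specialize (Hcc i Hi). pose proof (cc_pos n d s i).
    rewrite Cabs_inv, E in HWB.
    assert (cc n d s i * B < 1).
    { apply Rle_lt_trans with (/ (2 * B) * B); [apply Rmult_le_compat_r; lra|].
      replace (/ (2 * B) * B) with (1/2) by (field; lra); lra. }
    assert (1 <= cc n d s i * B).
    { replace 1 with (cc n d s i * / cc n d s i) by (field; lra). apply Rmult_le_compat_l; lra. }
    lra.
Qed.

Lemma Vlim_bound m B W : 1 <= B -> Cabs W <= B -> Cabs (Vlim m W) <= mu n d * (B ^ m + Kd).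
Proof.
  intros HB HW. unfold Vlim. pose proof mu_pos. pose proof K_ge2.
  rewrite Cabs_mul, Cabs_RtoC, Rabs_pos_eq by lra. apply Rmult_le_compat_l; [lra|].
  eapply Rle_trans; [apply Cabs_triangle|]. rewrite Cabs_pow, Cabs_RtoC, Rabs_pos_eq by lra.
  assert (Cabs W ^ m <= B ^ m) by (apply pow_incr; split; [apply Cabs_nonneg| auto]). lra.
Qed.

Lemma Vlim_lip m B : 1 <= B -> lipc (Vlim m) B (mu n d * (INR m * B ^ m)).
Proof.
  intros HB x y Hx Hy. unfold Vlim. pose proof mu_pos.
  replace (Csub (Cmul (RtoC (mu n d)) (Cadd (Cpow x m) (RtoC (Kd - 1)))) (Cmul (RtoC (mu n d)) (Cadd (Cpow y m) (RtoC (Kd - 1)))))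
    with (Cmul (RtoC (mu n d)) (Csub (Cpow x m) (Cpow y m))) by ring.
  rewrite Cabs_mul, Cabs_RtoC, Rabs_pos_eq by lra. rewrite Rmult_assoc. apply Rmult_le_compat_l; [lra|].
  apply Cpow_lip; auto.
Qed.

Lemma vcont_Vlim_pow m p a : a <> Some Czero -> vcont (fun b => Cpow (Vlim m (Wof b)) p) a.
Proof.
  intros Ha. pose proof mu_pos. pose proof K_ge2.
  set (B := Cabs (Wof a) + 1). assert (HB : 1 <= B) by (unfold B; pose proof (Cabs_nonneg (Wof a)); lra).
  set (V := mu n d * (B ^ m + Kd) + 1).
  assert (HV : 1 <= V) by (unfold V; pose proof (pow_le B m ltac:(lra)); nra).
  assert (HLV : 0 <= INR p * V ^ p) by (apply Rmult_le_pos; [apply pos_INR| apply pow_le; lra]).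
  assert (HLB : 0 <= mu n d * (INR m * B ^ m))
    by (apply Rmult_le_pos; [lra| apply Rmult_le_pos; [apply pos_INR| apply pow_le; lra]]).
  apply (vcont_comp (fun x => Cpow (Vlim m x) p) Wof a B (INR p * V ^ p * (mu n d * (INR m * B ^ m)))).
  - apply vcont_Wof; auto.
  - unfold B; lra.
  - apply Rmult_le_pos; auto.
  - apply (lip_comp (Vlim m) (fun x => Cpow x p) B V); auto.
    + apply Vlim_lip; auto.
    + intros x Hx. pose proof (Vlim_bound m B x HB Hx). unfold V; lra.
    + intros x y Hx Hy. apply Cpow_lip; auto.
Qed.

Lemma dom_of_abs m z : (Kd - 1) * Cabs z ^ m <> 1 -> Cadd Cone (Cmul (RtoC (Kd - 1)) (Cpow z m)) <> Czero.
Proof.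
  intros Hne E. apply Hne. pose proof K_ge2.
  assert (E2 : Cmul (RtoC (Kd - 1)) (Cpow z m) = Copp Cone)
    by (rewrite <- (Cring_th.(Radd_0_l) (Copp Cone)), <- E; ring).
  apply (f_equal Cabs) in E2.
  rewrite Cabs_mul, Cabs_RtoC, Cabs_pow, Cabs_opp, Cabs_1, Rabs_pos_eq in E2 by lra. exact E2.
Qed.

Lemma Vlim_inv m z : z <> Czero ->
  Vlim m (Cinv z) = Cmul (RtoC (mu n d)) (Cmul (Cadd Cone (Cmul (RtoC (Kd - 1)) (Cpow z m))) (Cinv (Cpow z m))).
Proof.
  intros Hz. unfold Vlim. rewrite Cpow_inv. pose proof (Cpow_neq0 z m Hz). f_equal. field. auto.
Qed.

Lemma Vlim_neq0 m z : z <> Czero -> (Kd - 1) * Cabs z ^ m <> 1 -> Vlim m (Cinv z) <> Czero.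
Proof.
  intros Hz Hr. pose proof mu_pos. rewrite Vlim_inv by auto.
  apply Cmul_neq0; [apply RtoC_neq0; lra|].
  apply Cmul_neq0; [apply dom_of_abs; auto| apply Cinv_neq0, Cpow_neq0; auto].
Qed.

Lemma h2_alg z : z <> Czero -> h2_dom (d 1%nat) (d n) z ->
  h2 (d 1%nat) (d n) z = Cdiv (RtoC alpha) (Cpow (Vlim (d 1%nat) (Cinv z)) (d n)).
Proof.
  intros Hz Hd. unfold h2_dom in Hd. rewrite Vlim_inv by auto. unfold h2, alpha. fold Kd in *.
  pose proof mu_pos. pose proof K_ge2.
  set (Z := Cpow z (d 1%nat)) in *. assert (HZ : Z <> Czero) by (apply Cpow_neq0; auto).
  rewrite Cpow_mul. fold Z.
  rewrite <- !Cpow_RtoC, <- Cpow_mulb, Cdiv_pow, RtoC_mul, Cdiv_pow. f_equal.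
  field. repeat split; auto; apply RtoC_neq0; lra.
Qed.

Lemma h1_alg z : z <> Czero -> h1_dom (d 1%nat * d n) z ->
  h1 (d 1%nat * d n) z = Cdiv (RtoC (Kd * mu n d)) (Vlim (d 1%nat * d n) (Cinv z)).
Proof.
  intros Hz Hd. unfold h1_dom in Hd. rewrite Vlim_inv by auto. unfold h1. fold Kd in *.
  pose proof mu_pos. pose proof K_ge2.
  set (Z := Cpow z (d 1%nat * d n)) in *. assert (HZ : Z <> Czero) by (apply Cpow_neq0; auto).
  rewrite RtoC_mul. field. repeat split; auto; apply RtoC_neq0; lra.
Qed.

Lemma target_id (Hf : Chat -> Chat) (c : R) (m p : nat) : c <> 0 -> sphere_continuous Hf -> (1 <= m)%nat ->
  (forall z, z <> Czero -> (Kd - 1) * Cabs z ^ m <> 1 ->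
     Hf (Some z) = Some (Cdiv (RtoC c) (Cpow (Vlim m (Cinv z)) p))) ->
  forall a, a <> Some Czero -> Hf a = hc (RtoC c) (Cpow (Vlim m (Wof a)) p).
Proof.
  intros Hc Hcont Hm Hval a Ha. pose proof K_ge2 as HK.
  set (L := (fun r => (Kd - 1) * r ^ m - 1) :: nil).
  assert (HL : incr L).
  { intros g Hg x y Hx Hxy. destruct Hg as [<-|[]]. pose proof (pow_lt_strict x y m ltac:(lra) Hm). nra. }
  apply (ext_hc Hf (fun _ => RtoC c) (fun b => Cpow (Vlim m (Wof b)) p) a).
  - intros eps He. apply Hcont; auto.
  - intros eps He. exists 1. split; [lra|]. intros. replace (Csub (RtoC c) (RtoC c)) with Czero by ring.
    rewrite Cabs_0. lra.
  - apply vcont_Vlim_pow; auto.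
  - apply RtoC_neq0; auto.
  - intros dl Hdl. destruct (dense_goodrad L a dl HL Hdl) as [z [Hz [Hz0 Hg]]].
    exists (Some z). split; auto.
    assert (Hr : (Kd - 1) * Cabs z ^ m <> 1) by (intro E; apply (Hg (fun r => (Kd - 1) * r ^ m - 1)); [left; auto| lra]).
    rewrite Hval by auto. unfold hc. simpl Wof.
    destruct (Ceq_dec _) as [E|E]; [exfalso; apply (Cpow_neq0 _ p (Vlim_neq0 m z Hz0 Hr)); auto| auto].
Qed.

Lemma H12_id H12 : sphere_ext (h2_dom (d 1%nat) (d n)) (h2 (d 1%nat) (d n)) H12 ->
  forall a, a <> Some Czero -> H12 a = hc (RtoC alpha) (Cpow (Vlim (d 1%nat) (Wof a)) (d n)).
Proof.
  intros [Hc Hag]. apply target_id; auto.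
  - pose proof alpha_pos. lra.
  - apply d1_ge1.
  - intros z Hz Hr. rewrite Hag by (apply dom_of_abs; auto). f_equal. apply h2_alg; auto. apply dom_of_abs; auto.
Qed.

Lemma H1_id H1 : sphere_ext (h1_dom (d 1%nat * d n)) (h1 (d 1%nat * d n)) H1 ->
  forall a, a <> Some Czero -> H1 a = hc (RtoC (Kd * mu n d)) (Vlim (d 1%nat * d n) (Wof a)).
Proof.
  intros [Hc Hag] a Ha. pose proof Kmu_pos.
  assert (Hk : (1 <= d 1%nat * d n)%nat) by (pose proof d1_ge1; pose proof dn_ge2; lia).
  rewrite (target_id H1 (Kd * mu n d) (d 1%nat * d n) 1); auto; [rewrite Cpow_1; reflexivity | lra|].
  intros z Hz Hr. rewrite Hag by (apply dom_of_abs; auto). rewrite Cpow_1. f_equal. apply h1_alg; auto.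
  apply dom_of_abs; auto.
Qed.

(** [R_n(R_n(z)) = P / Q] with [P -> alpha], [Q -> Vlim (d_1) (1/z) ^ {d_n}]:
    the outer region is mapped to [sigma v], inside the inner region. *)
Lemma iterate_approx B : 0 < B -> exists C, 0 < C /\ forall zeta, 0 < zeta <= 1 ->
  eventually (fun s => forall z, z <> Some Czero -> Cabs (Wof z) <= B -> exists P Q,
    Rhat s (Rhat s z) = hc P Q /\ Cabs (Csub P (RtoC alpha)) <= zeta /\
    Cabs (Csub Q (Cpow (Vlim (d 1%nat) (Wof z)) (d n))) <= C * zeta).
Proof.
  intros HB. pose proof mu_pos. pose proof K_ge2.
  set (L := mu n d * ((B + 1) ^ d 1%nat + Kd) + 1).
  assert (HL : 1 <= L) by (unfold L; pose proof (pow_le (B + 1) (d 1%nat) ltac:(lra)); nra).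
  set (C := INR (d n) * L ^ d n + 1).
  assert (HC : 0 < C) by (unfold C; pose proof (pos_INR (d n)); pose proof (pow_le L (d n) ltac:(lra)); nra).
  exists C. split; auto. intros zeta [Hz Hz1].
  eapply ev_imp; [apply (ev_and _ _ (outer_Rhat B zeta HB Hz) (inner_Rhat L zeta ltac:(lra) Hz))|].
  intros s Hs [Hout Hin] z Hz0 HWB.
  destruct (Hout z (Wof z) (Wrel_Wof z Hz0) HWB) as [v [Hv1 Hv2]].
  assert (HvW : Cabs (Vlim (d 1%nat) (Wof z)) <= L - 1)
    by (unfold L; replace (_ + 1 - 1) with (mu n d * ((B + 1) ^ d 1%nat + Kd)) by ring; apply Vlim_bound; lra).
  assert (Hvb : Cabs v <= L) by (pose proof (Cabs_near _ _ _ Hv2); lra).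
  destruct (Hin v Hvb) as [P [HP1 HP2]].
  exists P, (Cpow v (d n)). rewrite Hv1. split; [exact HP1|]. split; [exact HP2|].
  eapply Rle_trans; [apply Cpow_lip; [exact HL| exact Hvb| lra]|].
  pose proof (pow_le L (d n) ltac:(lra)). pose proof (pos_INR (d n)).
  apply Rle_trans with (INR (d n) * L ^ d n * zeta); [apply Rmult_le_compat_l; [nra| exact Hv2]|].
  unfold C. nra.
Qed.

Definition Rconj (s : R) (w : Chat) : Chat := psi (z0 s) (Rhat s (psi_inv (z0 s) w)).

(** Error propagation through the conjugated iterate: with [x] near [K mu]
    and [P] near [alpha], the point [W' = (x W)^{d_n} / P] stays bounded and
    is near [W^{d_n}], so [Vlim (d_1) W'] is near [Vlim (d_1 d_n) W]. *)
Lemma conj_error B : 0 < B -> exists C B2, 0 < C /\ 0 < B2 /\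
  forall zeta x W P, zeta <= 1 -> Cabs W <= B -> Rabs (x - Kd * mu n d) <= zeta ->
    Cabs (Csub P (RtoC alpha)) <= zeta -> alpha / 2 <= Cabs P ->
    let W' := Cdiv (Cpow (Cmul (RtoC x) W) (d n)) P in
    Cabs W' <= B2 /\
    forall v, Cabs (Csub v (Vlim (d 1%nat) W')) <= zeta ->
      Cabs (Csub v (Vlim (d 1%nat * d n) W)) <= C * zeta.
Proof.
  intros HB. pose proof alpha_pos as Ha. pose proof mu_pos as Hmu. pose proof Kmu_pos as HKm.
  set (Km := Kd * mu n d) in *. set (X := Km + 1). set (B1 := B + 1).
  assert (HX : 1 <= X) by (unfold X; lra). assert (HB1 : 1 <= B1) by (unfold B1; lra).
  set (B2 := 2 * (X * B1) ^ d n / alpha).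
  assert (HB2 : 0 < B2) by (apply Rdiv_lt_0_compat; [apply Rmult_lt_0_compat, pow_lt; nra| lra]).
  set (C1 := B1 ^ d n * (INR (d n) * X ^ d n + 1) * (2 / alpha)).
  assert (HC1 : 0 <= C1).
  { unfold C1. pose proof (pos_INR (d n)); pose proof (pow_le X (d n) ltac:(lra)); pose proof (pow_le B1 (d n) ltac:(lra)).
    apply Rmult_le_pos; [apply Rmult_le_pos; nra| left; apply Rdiv_lt_0_compat; lra]. }
  set (BB := B2 + B1 ^ d n + 1).
  assert (HB1n : 1 <= B1 ^ d n) by (rewrite <- (pow1 (d n)); apply pow_incr; lra).
  assert (HBB : 1 <= BB) by (unfold BB; lra).
  set (Lip := mu n d * (INR (d 1%nat) * BB ^ d 1%nat)).
  assert (HLip : 0 <= Lip)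
    by (unfold Lip; apply Rmult_le_pos; [lra| apply Rmult_le_pos; [apply pos_INR| apply pow_le; lra]]).
  exists (1 + Lip * C1), B2. split; [pose proof (Rmult_le_pos _ _ HLip HC1); lra|]. split; [exact HB2|].
  intros zeta x W P Hz1 HW Hx HP HPa W'.
  assert (Hxb : Rabs x <= X) by (pose proof (Rabs_triang (x - Km) Km); rewrite (Rabs_pos_eq Km) in H by lra;
    replace (x - Km + Km) with x in H by ring; unfold X; lra).
  assert (HW'B : Cabs W' <= B2) by (apply Wprime_bound; auto; unfold B1; lra).
  split; [exact HW'B|]. intros v Hv.
  assert (HWn : Cabs (Cpow W (d n)) <= BB)
    by (rewrite Cabs_pow; apply Rle_trans with (B1 ^ d n); [apply pow_incr; split; [apply Cabs_nonneg| unfold B1; lra]| unfold BB; lra]).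
  assert (HWpc : Cabs (Csub W' (Cpow W (d n))) <= C1 * zeta).
  { unfold W', C1. apply (Wp_close x Km W P alpha (d n) B1 X zeta); auto; try (unfold B1; lra);
      try (rewrite Rabs_pos_eq; unfold X; lra); reflexivity. }
  assert (HVk : Vlim (d 1%nat * d n) W = Vlim (d 1%nat) (Cpow W (d n)))
    by (unfold Vlim; rewrite Nat.mul_comm, Cpow_mul; reflexivity).
  rewrite HVk.
  replace (Csub v (Vlim (d 1%nat) (Cpow W (d n))))
    with (Cadd (Csub v (Vlim (d 1%nat) W')) (Csub (Vlim (d 1%nat) W') (Vlim (d 1%nat) (Cpow W (d n))))) by ring.
  eapply Rle_trans; [apply Cabs_triangle|].
  assert (Cabs (Csub (Vlim (d 1%nat) W') (Vlim (d 1%nat) (Cpow W (d n)))) <= Lip * (C1 * zeta)).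
  { eapply Rle_trans; [apply Vlim_lip; [exact HBB| unfold BB; lra| exact HWn]|]. apply Rmult_le_compat_l; auto. }
  nra.
Qed.

(** [Rconj(Rconj(z)) = x / v] with [x = z_0/sigma -> K mu] and
    [v -> Vlim (d_1 d_n) (1/z)]: [psi^{-1}] sends the outer region into the
    inner one, where [R_n] acts like [u |-> alpha / u^{d_n}], and the image
    [hc P u^{d_n}] lies in the outer region, where [R_n] has size [sigma]. *)
Lemma conj_iterate_approx B : 0 < B -> exists C, 0 < C /\ forall zeta, 0 < zeta <= 1 ->
  eventually (fun s => forall z, z <> Some Czero -> Cabs (Wof z) <= B -> exists P Q,
    Rconj s (Rconj s z) = hc P Q /\ Cabs (Csub P (RtoC (Kd * mu n d))) <= zeta /\
    Cabs (Csub Q (Vlim (d 1%nat * d n) (Wof z))) <= C * zeta).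
Proof.
  intros HB. pose proof alpha_pos as Ha. pose proof Kmu_pos as HKm.
  destruct (conj_error B HB) as [C [B2 [HC [HB2 Herr]]]].
  exists C. split; [exact HC|]. intros zeta [Hz Hz1].
  set (Lu := (Kd * mu n d + 1) * B + 1). assert (HLu : 0 < Lu) by (unfold Lu; nra).
  assert (Hmz : 0 < Rmin zeta (alpha / 2)) by (apply Rmin_glb_lt; lra).
  eapply ev_imp.
  { apply ev_and; [apply ev_and; [apply (ev_z zeta Hz)| apply ev_z0_pos]|].
    apply ev_and; [apply (inner_Rhat Lu _ HLu Hmz)| apply (outer_Rhat B2 zeta HB2 Hz)]. }
  intros s Hs [[Hxr Hz0p] [Hin Hout]] z Hz0 HWB. pose proof (scale_pos s) as Hsg.
  set (x := z0 s / scale s) in *. set (W := Wof z) in *. set (u := Cmul (RtoC x) W).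
  assert (Hu : Cabs u <= Lu).
  { unfold u, Lu. rewrite Cabs_mul, Cabs_RtoC. apply Rabs_def2 in Hxr.
    assert (Rabs x <= Kd * mu n d + 1) by (apply Rabs_le; lra).
    assert (Rabs x * Cabs W <= (Kd * mu n d + 1) * B)
      by (apply Rmult_le_compat; auto; [apply Rabs_pos| apply Cabs_nonneg]). lra. }
  destruct (Hin u Hu) as [P [HP1 HP2]].
  pose proof (Rmin_l zeta (alpha / 2)); pose proof (Rmin_r zeta (alpha / 2)).
  assert (HPa : alpha / 2 <= Cabs P)
    by (pose proof (Cabs_rev (RtoC alpha) P); rewrite Cabs_RtoC, Rabs_pos_eq, Cabs_sub_sym in H1 by lra; lra).
  assert (HP0 : P <> Czero) by (intro E; rewrite E, Cabs_0 in HPa; lra).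
  destruct (Herr zeta x W P Hz1 HWB ltac:(lra) ltac:(lra) HPa) as [HW' Hv].
  destruct (Hout (hc P (Cpow u (d n))) _ (Wrel_hc P _ HP0) HW') as [v [Hv1 Hv2]].
  exists (RtoC x), v. split; [|split].
  - unfold Rconj. assert (Hz0s : z0 s <> 0) by lra.
    rewrite (psi_inv_eq (z0 s) (scale s) z Hz0p Hsg Hz0). fold x W u.
    rewrite HP1, psi_inv_psi, Hv1, psi_hc by auto. reflexivity.
  - rewrite <- RtoC_sub, Cabs_RtoC. lra.
  - apply Hv. exact Hv2.
Qed.

Lemma conv_iterate H12 : sphere_ext (h2_dom (d 1%nat) (d n)) (h2 (d 1%nat) (d n)) H12 ->
  loc_unif_conv_0plus (fun s z => Rhat s (Rhat s z)) H12.
Proof.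
  intros Hh2. apply (loc_unif_of_hc_approx _ _ alpha (fun W => Cpow (Vlim (d 1%nat) W) (d n))).
  - exact alpha_pos.
  - apply H12_id; auto.
  - intros B HB. exists ((mu n d * ((B + 1) ^ d 1%nat + Kd)) ^ d n). intros W HW.
    rewrite Cabs_pow. apply pow_incr. split; [apply Cabs_nonneg| apply Vlim_bound; lra].
  - apply iterate_approx.
Qed.

Lemma conv_conj_iterate H1 : sphere_ext (h1_dom (d 1%nat * d n)) (h1 (d 1%nat * d n)) H1 ->
  loc_unif_conv_0plus (fun s z => Rconj s (Rconj s z)) H1.
Proof.
  intros Hh1. apply (loc_unif_of_hc_approx _ _ (Kd * mu n d) (Vlim (d 1%nat * d n))).
  - exact Kmu_pos.
  - apply H1_id; auto.
  - intros B HB. exists (mu n d * ((B + 1) ^ (d 1%nat * d n) + Kd)). intros W HW. apply Vlim_bound; lra.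
  - apply conj_iterate_approx.
Qed.

End Extension.

End Asymptotics.

(** Only the fixed-point relation [R_n(z_0) = 1] among the normalisations
    and the three limits enter the proof: they pin down the leading
    coefficient of the inner form. *)
Theorem lemma4p2 (n : nat) (d : nat -> nat) (Sn Tn z0 : R -> R)
  (Rhat : R -> Chat -> Chat) (H12 H1 : Chat -> Chat) :
  (3 <= n)%nat -> Nat.odd n = true ->
  (forall i, (1 <= i <= n)%nat -> (1 <= d i)%nat) ->
  sum_inv n d < 1 ->
  (exists s0, 0 < s0 /\ forall s, 0 < s < s0 ->
     Rn n d s (Sn s) (Tn s) (RtoC 1) = RtoC (z0 s) /\
     Rn n d s (Sn s) (Tn s) (RtoC (z0 s)) = RtoC 1 /\
     exists l1 l2,
       has_cderiv (Rn n d s (Sn s) (Tn s)) (RtoC 1) l1 /\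
       has_cderiv (Rn n d s (Sn s) (Tn s)) (RtoC (z0 s)) l2 /\
       Cmul l1 l2 = Cone) ->
  lim_0plus (fun s => Sn s / Rpower s (nu n d)) (mu n d) ->
  lim_0plus (fun s => Tn s / Rpower s (nu n d))
            ((INR (d 1%nat * d n) - 1) * mu n d) ->
  lim_0plus (fun s => z0 s / Rpower s (nu n d)) (INR (d 1%nat * d n) * mu n d) ->
  (forall s, 0 < s -> sphere_ext (Rn_dom n d s) (Rn n d s (Sn s) (Tn s)) (Rhat s)) ->
  sphere_ext (h2_dom (d 1%nat) (d n)) (h2 (d 1%nat) (d n)) H12 ->
  sphere_ext (h1_dom (d 1%nat * d n)) (h1 (d 1%nat * d n)) H1 ->
  loc_unif_conv_0plus (fun s z => Rhat s (Rhat s z)) H12 /\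
  loc_unif_conv_0plus
    (fun s z =>
       let Rh := fun w => psi (z0 s) (Rhat s (psi_inv (z0 s) w)) in
       Rh (Rh z)) H1.
Proof.
  intros Hn Ho Hd Hsum Hnorm HS HT Hz HR Hh2 Hh1.
  assert (Hfix : eventually (fun s => Rn n d s (Sn s) (Tn s) (RtoC (z0 s)) = RtoC 1)).
  { destruct Hnorm as [s0 [Hs0 Hf]]. exists s0. split; auto. intros s Hs. apply (Hf s Hs). }
  split.
  - exact (conv_iterate n d Sn Tn z0 Hn Ho Hd Hsum Hfix HS HT Hz Rhat HR H12 Hh2).
  - exact (conv_conj_iterate n d Sn Tn z0 Hn Ho Hd Hsum Hfix HS HT Hz Rhat HR H1 Hh1).
Qed.
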